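(* Let $\mathcal K$ be a 2-category and let $(v,\{\xi_i:s'_iv\to vs_i\}_{0\le i\le2})$ be a 1-cell in $\mathsf{Wdl}^{(2)}(\overline{\mathcal K})$ from $\{\lambda_{i,j}:s_js_i\to s_is_j\}$ to $\{\lambda'_{i,j}:s'_js'_i\to s'_is'_j\}$. Put $\xi_{01}:=v\bar\lambda_{01}.\xi_0s_1.s'_0\xi_1:s'_0s'_1v\to vs_0s_1$ and $\xi_{12}:=v\bar\lambda_{12}.\xi_1s_2.s'_1\xi_2:s'_1s'_2v\to vs_1s_2$. Then $(v,\xi_{01},\xi_2)$ is a 1-cell $\lambda_{01,2}\to\lambda'_{01,2}$ in $\mathsf{Wdl}(\overline{\mathcal K})$ and $(v,\xi_0,\xi_{12})$ is a 1-cell $\lambda_{0,12}\to\lambda'_{0,12}$ in $\mathsf{Wdl}(\overline{\mathcal K})$, where $\lambda_{01,2}:=s_0\lambda_{1,2}.\lambda_{0,2}s_1.s_2\bar\lambda_{01}$ (a weak distributive law between the monads $(s_0s_1,\bar\lambda_{01})$ and $s_2$) and $\lambda_{0,12}:=\lambda_{0,1}s_2.s_1\lambda_{0,2}.\bar\lambda_{12}s_0$ (between $s_0$ and $(s_1s_2,\bar\lambda_{12})$), and similarly with primes.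
   Context: Conventions. For 1-cells, $uw$ is the horizontal composite ($w$ first); for 2-cells $\alpha,\beta$, $\alpha\beta$ is their horizontal composite; a 1-cell next to a 2-cell means whiskering; $\alpha.\beta$ is vertical composition ($\beta$ first). A monad $(A,t)$ has multiplication $\mu:tt\to t$, unit $\eta:1_A\to t$; decorations carry over. Local idempotent closure $\overline{\mathcal K}$: same 0-cells as $\mathcal K$; 1-cells are pairs $(v,\bar v)$ with $v$ a 1-cell of $\mathcal K$ and $\bar v:v\to v$ an idempotent 2-cell; 2-cells $(v,\bar v)\to(v',\bar v')$ are 2-cells $\omega:v\to v'$ of $\mathcal K$ with $\bar v'.\omega=\omega=\omega.\bar v$; compositions induced from $\mathcal K$, identity 2-cell of $(v,\bar v)$ is $\bar v$. Monads $(A,(t,\bar t))$ in $\overline{\mathcal K}$ satisfy $\mu.t\eta=\mu.\eta t=\bar t$; we write just $t$, and $v$ for $(v,\bar v)$. $\mathsf{Mnd}(\overline{\mathcal K})$: 1-cells $(A,t)\to(A',t')$ are $(v,\psi)$, $\psi:t'v\to vt$ a 2-cell of $\overline{\mathcal K}$, with $\psi.\mu'v=v\mu.\psi t.t'\psi$, $\psi.\eta'v=v\eta$. Weak distributive law in $\overline{\mathcal K}$: monads $(A,t),(A,s)$ and $\lambda:ts\to st$ in $\overline{\mathcal K}$ with $\lambda.\mu s=s\mu.\lambda t.t\lambda$, $\lambda.t\mu=\mu t.s\lambda.\lambda s$, $\lambda.\eta s=\mu t.s\lambda.st\eta.s\eta$, $\lambda.t\eta=s\mu.\lambda t.\eta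 st.\eta t$; idempotent $\bar\lambda:=\mu t.s\lambda.st\eta$; induced monad $(st,\bar\lambda)$ with multiplication $\mu\mu.s\lambda t$, unit $\lambda.\eta\eta$. $\mathsf{Wdl}(\overline{\mathcal K})$: a 1-cell from $\lambda:ts\to st$ to $\lambda':t's'\to s't'$ is $(v,\xi,\zeta)$ with $(v,\xi):(A,t)\to(A',t')$, $(v,\zeta):(A,s)\to(A',s')$ 1-cells of $\mathsf{Mnd}(\overline{\mathcal K})$ and $v\lambda.\xi s.t'\zeta=v\bar\lambda.\zeta t.s'\xi.\lambda'v$. $\mathsf{Wdl}^{(2)}(\overline{\mathcal K})$: a 0-cell consists of monads $(A,s_0),(A,s_1),(A,s_2)$ in $\overline{\mathcal K}$ and weak distributive laws $\lambda_{i,j}:s_js_i\to s_is_j$ ($0\le i<j\le2$) with $\lambda_{0,1}s_2.s_1\lambda_{0,2}.\lambda_{1,2}s_0=s_0\lambda_{1,2}.\lambda_{0,2}s_1.s_2\lambda_{0,1}$; a 1-cell is $v$ with $\xi_i:s'_iv\to vs_i$ such that each $(v,\xi_i,\xi_j)$, $i<j$, is a 1-cell $\lambda_{i,j}\to\lambda'_{i,j}$ of $\mathsf{Wdl}(\overline{\mathcal K})$. $\bar\lambda_{ij}$ is the idempotent of $\lambda_{i,j}$. *)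

(* A (strict) 2-category in single-sorted presentation: 0-cells, 1-cells and
   2-cells are three types, with domain/codomain maps and total composition
   operations whose laws are required whenever the arguments are composable. *)
Set Implicit Arguments.
Unset Strict Implicit.

Record TwoCat := {
  Ob : Type; C1 : Type; C2 : Type;
  dom1 : C1 -> Ob; cod1 : C1 -> Ob;
  id1 : Ob -> C1;
  comp1 : C1 -> C1 -> C1;        (* comp1 u w = uw  (w first) *)
  src2 : C2 -> C1; tgt2 : C2 -> C1;
  id2 : C1 -> C2;
  vcomp : C2 -> C2 -> C2;        (* vcomp a b = a.b (b first) *)
  hcomp : C2 -> C2 -> C2;
  dom_id1 : forall A, dom1 (id1 A) = A;
  cod_id1 : forall A, cod1 (id1 A) = A;
  dom_comp1 : forall u w, dom1 u = cod1 w -> dom1 (comp1 u w) = dom1 w;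
  cod_comp1 : forall u w, dom1 u = cod1 w -> cod1 (comp1 u w) = cod1 u;
  comp1A : forall u w x, dom1 u = cod1 w -> dom1 w = cod1 x ->
    comp1 u (comp1 w x) = comp1 (comp1 u w) x;
  comp1_id_l : forall u, comp1 (id1 (cod1 u)) u = u;
  comp1_id_r : forall u, comp1 u (id1 (dom1 u)) = u;
  dom_src_tgt : forall a, dom1 (src2 a) = dom1 (tgt2 a);
  cod_src_tgt : forall a, cod1 (src2 a) = cod1 (tgt2 a);
  src_id2 : forall u, src2 (id2 u) = u;
  tgt_id2 : forall u, tgt2 (id2 u) = u;
  src_vcomp : forall a b, src2 a = tgt2 b -> src2 (vcomp a b) = src2 b;
  tgt_vcomp : forall a b, src2 a = tgt2 b -> tgt2 (vcomp a b) = tgt2 a;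
  vcompA : forall a b c, src2 a = tgt2 b -> src2 b = tgt2 c ->
    vcomp a (vcomp b c) = vcomp (vcomp a b) c;
  vcomp_id_l : forall a, vcomp (id2 (tgt2 a)) a = a;
  vcomp_id_r : forall a, vcomp a (id2 (src2 a)) = a;
  src_hcomp : forall a b, dom1 (src2 a) = cod1 (src2 b) ->
    src2 (hcomp a b) = comp1 (src2 a) (src2 b);
  tgt_hcomp : forall a b, dom1 (src2 a) = cod1 (src2 b) ->
    tgt2 (hcomp a b) = comp1 (tgt2 a) (tgt2 b);
  hcompA : forall a b c, dom1 (src2 a) = cod1 (src2 b) ->
    dom1 (src2 b) = cod1 (src2 c) ->
    hcomp a (hcomp b c) = hcomp (hcomp a b) c;
  hcomp_id_l : forall a, hcomp (id2 (id1 (cod1 (src2 a)))) a = a;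
  hcomp_id_r : forall a, hcomp a (id2 (id1 (dom1 (src2 a)))) = a;
  hcomp_id2 : forall u w, dom1 u = cod1 w ->
    hcomp (id2 u) (id2 w) = id2 (comp1 u w);
  interchange : forall a b c d, src2 a = tgt2 b -> src2 c = tgt2 d ->
    dom1 (src2 a) = cod1 (src2 c) ->
    hcomp (vcomp a b) (vcomp c d) = vcomp (hcomp a c) (hcomp b d)
}.

Arguments dom1 {_} u. Arguments cod1 {_} u. Arguments id1 {_} A.
Arguments comp1 {_} u w. Arguments src2 {_} a. Arguments tgt2 {_} a.
Arguments id2 {_} u. Arguments vcomp {_} a b. Arguments hcomp {_} a b.

Infix "⋅" := vcomp (at level 40, left associativity).

Definition hom1 (K : TwoCat) (u : C1 K) (A B : Ob K) := dom1 u = A /\ cod1 u = B.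
Definition cell2 (K : TwoCat) (a : C2 K) (f g : C1 K) := src2 a = f /\ tgt2 a = g.

(* ---- the local idempotent closure  Kbar ----
   A 1-cell of Kbar is a pair (v, vbar). *)
Definition kb1 (K : TwoCat) := (C1 K * C2 K)%type.

Definition khom (K : TwoCat) (v : kb1 K) (A B : Ob K) :=
  hom1 (fst v) A B /\ cell2 (snd v) (fst v) (fst v) /\ (snd v) ⋅ (snd v) = (snd v).

Definition kcell (K : TwoCat) (w : C2 K) (v v' : kb1 K) :=
  cell2 w (fst v) (fst v') /\ (snd v') ⋅ w = w /\ w ⋅ (snd v) = w.

Definition kcomp1 (K : TwoCat) (u w : kb1 K) : kb1 K := (comp1 (fst u) (fst w), hcomp (snd u) (snd w)).
Definition kid1 (K : TwoCat) (A : Ob K) : kb1 K := (id1 A, id2 (id1 A)).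

(* whiskering in Kbar: with the identity 2-cell of (u,ubar), i.e. ubar *)
Definition wl (K : TwoCat) (u : kb1 K) (a : C2 K) := hcomp (snd u) a.
Definition wr (K : TwoCat) (a : C2 K) (u : kb1 K) := hcomp a (snd u).

Definition is_monad (K : TwoCat) (A : Ob K) (t : kb1 K) (mu eta : C2 K) :=
  khom t A A /\ kcell mu (kcomp1 t t) t /\ kcell eta (kid1 A) t /\
  mu ⋅ wl t mu = mu ⋅ wr mu t /\
  mu ⋅ wl t eta = (snd t) /\ mu ⋅ wr eta t = (snd t).

Definition is_mnd1 (K : TwoCat) (A A' : Ob K)
    (t : kb1 K) (mu eta : C2 K) (t' : kb1 K) (mu' eta' : C2 K)
    (v : kb1 K) (psi : C2 K) :=
  khom v A A' /\ kcell psi (kcomp1 t' v) (kcomp1 v t) /\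
  psi ⋅ wr mu' v = wl v mu ⋅ wr psi t ⋅ wl t' psi /\
  psi ⋅ wr eta' v = wl v eta.

(* ---- weak distributive laws lam : ts -> st in Kbar ----
   t has multiplication mut, unit etat; s has mus, etas *)
Definition is_wdl (K : TwoCat) (A : Ob K)
    (t : kb1 K) (mut etat : C2 K) (s : kb1 K) (mus etas : C2 K) (lam : C2 K) :=
  is_monad A t mut etat /\ is_monad A s mus etas /\
  kcell lam (kcomp1 t s) (kcomp1 s t) /\
  lam ⋅ wr mut s = wl s mut ⋅ wr lam t ⋅ wl t lam /\
  lam ⋅ wl t mus = wr mus t ⋅ wl s lam ⋅ wr lam s /\
  lam ⋅ wr etat s = wr mus t ⋅ wl s lam ⋅ wl (kcomp1 s t) etas ⋅ wl s etat /\
  lam ⋅ wl t etas = wl s mut ⋅ wr lam t ⋅ wr etat (kcomp1 s t) ⋅ wr etas t.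

Definition lambar (K : TwoCat) (t : kb1 K) (s : kb1 K) (mus etas : C2 K)
    (lam : C2 K) : C2 K :=
  wr mus t ⋅ wl s lam ⋅ wl (kcomp1 s t) etas.

(* the induced monad (st, lambar) with multiplication mu mu . s lam t
   and unit lam . eta eta *)
Definition cmp1 (K : TwoCat) (t s : kb1 K) (mus etas lam : C2 K) : kb1 K :=
  (comp1 (fst s) (fst t), lambar t s mus etas lam).
Definition cmp_mu (K : TwoCat) (t s : kb1 K) (mut mus lam : C2 K) : C2 K :=
  hcomp mus mut ⋅ wr (wl s lam) t.
Definition cmp_eta (K : TwoCat) (etat etas lam : C2 K) : C2 K :=
  lam ⋅ hcomp etat etas.

(* ---- 1-cells (v, xi, zeta) : lam -> lam' of Wdl(Kbar),
   xi for the monad t, zeta for the monad s (lam : ts -> st) ---- *)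
Definition is_wdl1 (K : TwoCat) (A A' : Ob K)
    (t : kb1 K) (mut etat : C2 K) (s : kb1 K) (mus etas lam : C2 K)
    (t' : kb1 K) (mut' etat' : C2 K) (s' : kb1 K) (mus' etas' lam' : C2 K)
    (v : kb1 K) (xi zeta : C2 K) :=
  is_mnd1 A A' t mut etat t' mut' etat' v xi /\
  is_mnd1 A A' s mus etas s' mus' etas' v zeta /\
  wl v lam ⋅ wr xi s ⋅ wl t' zeta =
    wl v (lambar t s mus etas lam) ⋅ wr zeta t ⋅ wl s' xi ⋅ wr lam' v.

(* ---- 0-cells of Wdl^(2)(Kbar): monads s0,s1,s2 on A and weak distributive
   laws lam_ij : s_j s_i -> s_i s_j satisfying the Yang-Baxter condition ---- *)
Definition is_wdl2 (K : TwoCat) (A : Ob K)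
    (s0 : kb1 K) (mu0 eta0 : C2 K) (s1 : kb1 K) (mu1 eta1 : C2 K)
    (s2 : kb1 K) (mu2 eta2 : C2 K) (l01 l02 l12 : C2 K) :=
  is_wdl A s1 mu1 eta1 s0 mu0 eta0 l01 /\
  is_wdl A s2 mu2 eta2 s0 mu0 eta0 l02 /\
  is_wdl A s2 mu2 eta2 s1 mu1 eta1 l12 /\
  wr l01 s2 ⋅ wl s1 l02 ⋅ wr l12 s0 = wl s0 l12 ⋅ wr l02 s1 ⋅ wl s2 l01.

Definition is_wdl2_hom (K : TwoCat) (A A' : Ob K)
    (s0 : kb1 K) (mu0 eta0 : C2 K) (s1 : kb1 K) (mu1 eta1 : C2 K)
    (s2 : kb1 K) (mu2 eta2 : C2 K) (l01 l02 l12 : C2 K)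
    (s0' : kb1 K) (mu0' eta0' : C2 K) (s1' : kb1 K) (mu1' eta1' : C2 K)
    (s2' : kb1 K) (mu2' eta2' : C2 K) (l01' l02' l12' : C2 K)
    (v : kb1 K) (xi0 xi1 xi2 : C2 K) :=
  is_wdl1 A A' s1 mu1 eta1 s0 mu0 eta0 l01 s1' mu1' eta1' s0' mu0' eta0' l01' v xi1 xi0 /\
  is_wdl1 A A' s2 mu2 eta2 s0 mu0 eta0 l02 s2' mu2' eta2' s0' mu0' eta0' l02' v xi2 xi0 /\
  is_wdl1 A A' s2 mu2 eta2 s1 mu1 eta1 l12 s2' mu2' eta2' s1' mu1' eta1' l12' v xi2 xi1.

(* The pairs (v, xi01) and (v, xi12) are 1-cells between the composite monads
   because every 1-cell of weak distributive laws induces one ([is_mnd1_cmp]).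
   The remaining compatibility conditions follow from the Yang-Baxter equation
   and the pairwise compatibilities of xi0, xi1, xi2, once one knows that both
   composite laws l01_2 and l0_12 have the same idempotent on s0 s1 s2
   ([lambar_lam01_2], [lambar_lam0_12], [rho0_lambar12]).
   All identities involved are equalities of string diagrams in the local
   idempotent closure. *)

From Stdlib Require Import List Arith Lia Bool.
Import ListNotations.

Set Implicit Arguments.
Unset Strict Implicit.

(** * String diagrams modulo interchange *)

(* A signature lists the 1-cell atoms, as [(dom, cod)] pairs of object indices,
   and the generating 2-cells, as [(source word, target word, dom, cod)].  A word
   [[a1; ...; an]] denotes the 1-cell [a1 ... an]. *)
Record signature := {
  sig_cells : list (nat * nat);
  sig_gens : list (list nat * list nat * nat * nat) }.

(* A layer [(p, j, q)] is generator [j] whiskered by the words [p] and [q]; a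
   chain is a list of layers, the last applied first. *)
Definition layer := (list nat * nat * list nat)%type.

Definition word_eqb (u w : list nat) : bool :=
  if list_eq_dec Nat.eq_dec u w then true else false.

Lemma word_eqb_eq u w : word_eqb u w = true -> u = w.
Proof. unfold word_eqb. now destruct list_eq_dec. Qed.

Lemma word_eqb_refl w : word_eqb w w = true.
Proof. unfold word_eqb. now destruct list_eq_dec. Qed.

Definition layer_eq_dec (x y : layer) : {x = y} + {x <> y}.
Proof. repeat decide equality. Defined.

Definition layer_eqb (x y : layer) : bool := if layer_eq_dec x y then true else false.

Definition layers_eqb (l1 l2 : list layer) : bool :=
  if list_eq_dec layer_eq_dec l1 l2 then true else false.

Lemma layers_eqb_eq l1 l2 : layers_eqb l1 l2 = true -> l1 = l2.
Proof. unfold layers_eqb. now destruct list_eq_dec. Qed.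

Section Syntax.
Variable Sg : signature.

Definition cell_dom i := fst (nth i (sig_cells Sg) (0, 0)).
Definition cell_cod i := snd (nth i (sig_cells Sg) (0, 0)).
Definition gen_src j := let '(w, _, _, _) := nth j (sig_gens Sg) ([], [], 0, 0) in w.
Definition gen_tgt j := let '(_, w, _, _) := nth j (sig_gens Sg) ([], [], 0, 0) in w.
Definition gen_dom j := let '(_, _, d, _) := nth j (sig_gens Sg) ([], [], 0, 0) in d.
Definition gen_cod j := let '(_, _, _, c) := nth j (sig_gens Sg) ([], [], 0, 0) in c.

Fixpoint word_ok (d c : nat) (w : list nat) : bool :=
  match w with
  | [] => d =? c
  | a :: w' => (a <? length (sig_cells Sg)) && (cell_cod a =? c) && word_ok d (cell_dom a) w'
  end.

Definition word_cod (d : nat) (w : list nat) : nat :=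
  match w with [] => d | a :: _ => cell_cod a end.

Definition layer_src (L : layer) := let '(p, j, q) := L in p ++ gen_src j ++ q.
Definition layer_tgt (L : layer) := let '(p, j, q) := L in p ++ gen_tgt j ++ q.
Definition layer_ok (d c : nat) (L : layer) : bool :=
  let '(p, j, q) := L in
  (j <? length (sig_gens Sg)) && word_ok d (gen_dom j) q && word_ok (gen_cod j) c p.

Definition chain_tgt (w : list nat) (ls : list layer) : list nat :=
  match ls with [] => w | L :: _ => layer_tgt L end.

Fixpoint chain_ok (d c : nat) (w : list nat) (ls : list layer) : bool :=
  match ls with
  | [] => word_ok d c w
  | L :: ls' => layer_ok d c L && word_eqb (layer_src L) (chain_tgt w ls') && chain_ok d c w ls'
  end.

(* The interchange law for two adjacent layers [X] above [Y] whose generators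
   are side by side; [m] is the word between them. *)
Definition swap_layers (X Y : layer) : option (layer * layer) :=
  let '(p1, j1, q1) := X in
  let '(p2, j2, q2) := Y in
  if length p1 + length (gen_src j1) <=? length p2 then
    let m := skipn (length p1 + length (gen_src j1)) p2 in
    if word_eqb p2 (p1 ++ gen_src j1 ++ m) && word_eqb q1 (m ++ gen_tgt j2 ++ q2)
       && word_ok (gen_cod j2) (gen_dom j1) m
    then Some ((p1 ++ gen_tgt j1 ++ m, j2, q2), (p1, j1, m ++ gen_src j2 ++ q2))
    else None
  else if length p2 + length (gen_tgt j2) <=? length p1 then
    let m := skipn (length p2 + length (gen_tgt j2)) p1 in
    if word_eqb p1 (p2 ++ gen_tgt j2 ++ m) && word_eqb q2 (m ++ gen_src j1 ++ q1)
       && word_ok (gen_cod j1) (gen_dom j2) m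
    then Some ((p2, j2, m ++ gen_tgt j1 ++ q1), (p2 ++ gen_src j2 ++ m, j1, q1))
    else None
  else None.

Fixpoint swap_at (n : nat) (ls : list layer) : option (list layer) :=
  match n, ls with
  | 0, X :: Y :: l =>
      match swap_layers X Y with Some (Y', X') => Some (Y' :: X' :: l) | None => None end
  | S n', Z :: l => match swap_at n' l with Some l' => Some (Z :: l') | None => None end
  | _, _ => None
  end.

Fixpoint run_swaps (ns : list nat) (ls : list layer) : option (list layer) :=
  match ns with
  | [] => Some ls
  | n :: ns' => match swap_at n ls with Some ls' => run_swaps ns' ls' | None => None end
  end.

Fixpoint swaps_ok (d c : nat) (w : list nat) (ns : list nat) (ls : list layer) : bool :=
  chain_ok d c w ls &&
  match ns with
  | [] => true
  | n :: ns' => match swap_at n ls with Some ls' => swaps_ok d c w ns' ls' | None => false end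
  end.

Definition whisker_l (P : list nat) (L : layer) : layer := let '(p, j, q) := L in (P ++ p, j, q).
Definition whisker_r (Q : list nat) (L : layer) : layer := let '(p, j, q) := L in (p, j, q ++ Q).
Definition whisker (P Q : list nat) (ls : list layer) : list layer :=
  map (whisker_l P) (map (whisker_r Q) ls).

Record rule := {
  rule_dom : nat; rule_cod : nat; rule_src : list nat;
  rule_lhs : list layer; rule_rhs : list layer }.

Definition rule_sym (r : rule) : rule :=
  {| rule_dom := rule_dom r; rule_cod := rule_cod r; rule_src := rule_src r;
     rule_lhs := rule_rhs r; rule_rhs := rule_lhs r |}.

Definition rule_wf (r : rule) : bool :=
  chain_ok (rule_dom r) (rule_cod r) (rule_src r) (rule_lhs r)
  && chain_ok (rule_dom r) (rule_cod r) (rule_src r) (rule_rhs r)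
  && word_eqb (chain_tgt (rule_src r) (rule_lhs r)) (chain_tgt (rule_src r) (rule_rhs r)).

Definition rule_apply (ls : list layer) (n : nat) (P Q : list nat) (r : rule) : list layer :=
  firstn n ls ++ whisker P Q (rule_rhs r) ++ skipn (n + length (rule_lhs r)) ls.

Definition rule_applies (d c : nat) (w : list nat) (ls : list layer) (n : nat)
    (P Q : list nat) (r : rule) : bool :=
  chain_ok d c w ls && chain_ok d c w (rule_apply ls n P Q r)
  && layers_eqb (firstn (length (rule_lhs r)) (skipn n ls)) (whisker P Q (rule_lhs r))
  && word_eqb (chain_tgt w (skipn (n + length (rule_lhs r)) ls)) (P ++ rule_src r ++ Q)
  && word_ok d (rule_dom r) Q && word_ok (rule_cod r) c P.

Inductive term :=
  | TGen (j : nat) | TCell (i : nat) | TVcomp (a b : term) | THcomp (a b : term).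

Fixpoint term_type (t : term) : option (list nat * list nat * nat * nat) :=
  match t with
  | TGen j => if j <? length (sig_gens Sg) then Some (gen_src j, gen_tgt j, gen_dom j, gen_cod j) else None
  | TCell i => if i <? length (sig_cells Sg) then Some ([i], [i], cell_dom i, cell_cod i) else None
  | TVcomp a b =>
      match term_type a, term_type b with
      | Some (sa, ta, da, ca), Some (sb, tb, db, cb) =>
          if word_eqb sa tb && (da =? db) && (ca =? cb) then Some (sb, ta, da, ca) else None
      | _, _ => None
      end
  | THcomp a b =>
      match term_type a, term_type b with
      | Some (sa, ta, da, ca), Some (sb, tb, db, cb) =>
          if da =? cb then Some (sa ++ sb, ta ++ tb, db, ca) else None
      | _, _ => None
      end
  end.

Fixpoint term_chain (t : term) : list layer :=
  match t with
  | TGen j => [([], j, [])]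
  | TCell _ => []
  | TVcomp a b => term_chain a ++ term_chain b
  | THcomp a b =>
      match term_type a, term_type b with
      | Some (sa, _, _, _), Some (_, tb, _, _) =>
          map (whisker_r tb) (term_chain a) ++ map (whisker_l sa) (term_chain b)
      | _, _ => []
      end
  end.

Definition term_src t := match term_type t with Some (s, _, _, _) => s | None => [] end.
Definition term_dom t := match term_type t with Some (_, _, d, _) => d | None => 0 end.
Definition term_cod t := match term_type t with Some (_, _, _, c) => c | None => 0 end.

Definition terms_parallel (t1 t2 : term) : bool :=
  match term_type t1, term_type t2 with
  | Some (s, u, d, c), Some (s', u', d', c') =>
      word_eqb s s' && word_eqb u u' && (d =? d') && (c =? c')
  | _, _ => false
  end.

Definition rule_of_terms (t1 t2 : term) : rule :=
  {| rule_dom := term_dom t1; rule_cod := term_cod t1; rule_src := term_src t1;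
     rule_lhs := term_chain t1; rule_rhs := term_chain t2 |}.

(* Untrusted search for interchange moves: everything it finds is re-checked by
   [swaps_ok] and [rule_applies]. *)

Definition up_moves (a b : nat) : list nat := rev (seq b (a - b)).
Definition down_moves (a b : nat) : list nat := seq a (b - a).

Definition search_state := (list layer * list nat)%type.

Definition advance (ns : list nat) (st : search_state) : option search_state :=
  match run_swaps ns (fst st) with Some ls => Some (ls, snd st ++ ns) | None => None end.

Fixpoint first_some {A B : Type} (f : A -> option B) (l : list A) : option B :=
  match l with
  | [] => None
  | x :: l' => match f x with Some y => Some y | None => first_some f l' end
  end.

Definition no_layer : layer := ([], 0, []).

(* The whiskers under which rule layer [R0] appears as chain layer [Lb]. *)
Definition frame_left (Lb R0 : layer) : list nat :=
  let '(pb, _, _) := Lb in let '(p0, _, _) := R0 in firstn (length pb - length p0) pb.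
Definition frame_right (Lb R0 : layer) : list nat :=
  let '(_, _, qb) := Lb in let '(_, _, q0) := R0 in skipn (length q0) qb.

Definition move_mark (a b : nat) (ms : list bool) : list bool :=
  let ms' := firstn a ms ++ skipn (S a) ms in
  firstn b ms' ++ nth a ms false :: skipn b ms'.

Definition move (a b : nat) (st : search_state * list bool) : option (search_state * list bool) :=
  let '(st0, ms) := st in
  option_map (fun st1 => (st1, move_mark a b ms))
    (advance (if a <=? b then down_moves a b else up_moves a b) st0).

Fixpoint first_mark (ms : list bool) : nat :=
  match ms with [] => 0 | true :: _ => 0 | false :: ms' => S (first_mark ms') end.
Definition last_mark (ms : list bool) : nat := length ms - S (first_mark (rev ms)).

(* Unmarked layers between marked ones are moved above the marked ones when
   possible (top-down), the remaining ones below them (bottom-up). *)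
Fixpoint lift_unmarked (ps : list nat) (top : nat) (st : search_state * list bool) :=
  match ps with
  | [] => st
  | p :: ps' =>
      if nth p (snd st) false then lift_unmarked ps' top st
      else match move p top st with
           | Some st' => lift_unmarked ps' (S top) st'
           | None => lift_unmarked ps' top st
           end
  end.

Fixpoint sink_unmarked (ps : list nat) (bot : nat) (st : search_state * list bool) :=
  match ps with
  | [] => Some st
  | p :: ps' =>
      if nth p (snd st) false then sink_unmarked ps' bot st
      else match move p bot st with
           | Some st' => sink_unmarked ps' (bot - 1) st'
           | None => None
           end
  end.

Definition make_contiguous (st : search_state * list bool) : option (search_state * list bool) :=
  let top := first_mark (snd st) in
  let st1 := lift_unmarked (seq (S top) (last_mark (snd st) - S top)) top st in
  let top1 := first_mark (snd st1) in
  let bot1 := last_mark (snd st1) in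
  sink_unmarked (rev (seq (S top1) (bot1 - S top1))) bot1 st1.

(* Make layer [j] the one right below the block occupying positions [i, i + m). *)
Definition bring (i m j : nat) (st : search_state) : option (search_state * nat) :=
  if (i <=? j) && (j <? i + m) then None
  else
    let ms := map (fun k => ((i <=? k) && (k <? i + m)) || (k =? j)) (seq 0 (length (fst st))) in
    match make_contiguous (st, ms) with
    | Some (st', ms') =>
        let i' := first_mark ms' in
        if j <? i then option_map (fun st'' => (st'', i')) (advance (down_moves i' (i' + m)) st')
        else Some (st', i')
    | None => None
    end.

Definition layer_gen (L : layer) : nat := let '(_, j, _) := L in j.
Definition layer_width_l (L : layer) : nat := let '(p, _, _) := L in length p.
Definition layer_width_r (L : layer) : nat := let '(_, _, q) := L in length q.

(* [L] can play the role of rule layer [T] in a block whose top [Lb] plays [R0]. *)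
Definition consistent (Lb R0 T L : layer) : bool :=
  (layer_gen L =? layer_gen T)
  && (layer_width_l L + layer_width_l R0 =? layer_width_l Lb + layer_width_l T)
  && (layer_width_r L + layer_width_r R0 =? layer_width_r Lb + layer_width_r T).

Fixpoint gather (lhs : list layer) (R0 : layer) (rest : list layer) (i m : nat) (st : search_state)
    : option (search_state * nat) :=
  match rest with
  | [] =>
      let Lb := nth i (fst st) no_layer in
      if layers_eqb (firstn m (skipn i (fst st))) (whisker (frame_left Lb R0) (frame_right Lb R0) lhs)
      then Some (st, i) else None
  | T :: rest' =>
      first_some (fun j =>
        match bring i m j st with
        | Some (st', i') =>
            if consistent (nth i' (fst st') no_layer) R0 T (nth (i' + m) (fst st') no_layer)
            then gather lhs R0 rest' i' (S m) st'
            else None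
        | None => None
        end) (seq 0 (length (fst st)))
  end.

Definition find_occurrence (ls lhs : list layer) : option (list nat * nat * list nat * list nat) :=
  match lhs with
  | [] => None
  | R0 :: rest =>
      first_some (fun i =>
        if layer_gen (nth i ls no_layer) =? layer_gen R0 then
          match gather lhs R0 rest i 1 (ls, []) with
          | Some ((ls', ns), i') =>
              let Lb := nth i' ls' no_layer in Some (ns, i', frame_left Lb R0, frame_right Lb R0)
          | None => None
          end
        else None) (seq 0 (length ls))
  end.

Definition rewrite_chain (d c : nat) (w : list nat) (ls : list layer) (r : rule) : option (list layer) :=
  match find_occurrence ls (rule_lhs r) with
  | Some (ns, n, P, Q) =>
      match run_swaps ns ls with
      | Some ls' =>
          if swaps_ok d c w ns ls && rule_applies d c w ls' n P Q r
          then Some (rule_apply ls' n P Q r) else None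
      | None => None
      end
  | None => None
  end.

Fixpoint align (target : list layer) (k : nat) (st : search_state) : option search_state :=
  match target with
  | [] => Some st
  | T :: target' =>
      first_some (fun j =>
        match advance (up_moves j k) st with
        | Some st' => if layer_eqb (nth k (fst st') no_layer) T then align target' (S k) st' else None
        | None => None
        end) (seq k (length (fst st) - k))
  end.

Definition interchange_eqb (d c : nat) (w : list nat) (ls ls' : list layer) : bool :=
  match align ls' 0 (ls, []) with
  | Some (_, ns) =>
      swaps_ok d c w ns ls
      && match run_swaps ns ls with Some l => layers_eqb l ls' | None => false end
  | None => false
  end.

End Syntax.

Section Semantics.
Variable K : TwoCat.
Variable Sg : signature.
Variable ob : nat -> Ob K.
Variable atom : nat -> kb1 K.
Variable gen : nat -> C2 K.

Local Notation word_ok := (word_ok Sg).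
Local Notation gen_src := (gen_src Sg).
Local Notation gen_tgt := (gen_tgt Sg).
Local Notation gen_dom := (gen_dom Sg).
Local Notation gen_cod := (gen_cod Sg).
Local Notation layer_ok := (layer_ok Sg).
Local Notation layer_src := (layer_src Sg).
Local Notation layer_tgt := (layer_tgt Sg).
Local Notation chain_ok := (chain_ok Sg).
Local Notation chain_tgt := (chain_tgt Sg).

Definition word1 (d : nat) (w : list nat) : C1 K :=
  fold_right (fun a u => comp1 (fst (atom a)) u) (id1 (ob d)) w.
Definition word2 (d : nat) (w : list nat) : C2 K :=
  fold_right (fun a x => hcomp (snd (atom a)) x) (id2 (id1 (ob d))) w.
Definition word (d : nat) (w : list nat) : kb1 K := (word1 d w, word2 d w).

Definition layer2 (d : nat) (L : layer) : C2 K :=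
  let '(p, j, q) := L in hcomp (word2 (gen_cod j) p) (hcomp (gen j) (word2 d q)).
Definition chain2 (d : nat) (w : list nat) (ls : list layer) : C2 K :=
  fold_right (fun L x => layer2 d L ⋅ x) (word2 d w) ls.

Fixpoint term2 (t : term) : C2 K :=
  match t with
  | TGen j => gen j
  | TCell i => snd (atom i)
  | TVcomp a b => term2 a ⋅ term2 b
  | THcomp a b => hcomp (term2 a) (term2 b)
  end.

Definition cells_valid := forall i, i < length (sig_cells Sg) ->
  khom (atom i) (ob (cell_dom Sg i)) (ob (cell_cod Sg i)).
Definition gens_valid := forall j, j < length (sig_gens Sg) ->
  word_ok (gen_dom j) (gen_cod j) (gen_src j) = true /\
  word_ok (gen_dom j) (gen_cod j) (gen_tgt j) = true /\
  kcell (gen j) (word (gen_dom j) (gen_src j)) (word (gen_dom j) (gen_tgt j)).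

Hypothesis cells_ok : cells_valid.
Hypothesis gens_ok : gens_valid.

Lemma word_ok_cons d c a w : word_ok d c (a :: w) = true ->
  a < length (sig_cells Sg) /\ cell_cod Sg a = c /\ word_ok d (cell_dom Sg a) w = true.
Proof.
  simpl. intros H. apply andb_true_iff in H as [H H3]. apply andb_true_iff in H as [H1 H2].
  apply Nat.ltb_lt in H1. apply Nat.eqb_eq in H2. auto.
Qed.

Lemma word1_hom d c w : word_ok d c w = true -> hom1 (word1 d w) (ob d) (ob c).
Proof.
  revert c; induction w as [|a w IH]; intros c H.
  - simpl in H. apply Nat.eqb_eq in H; subst. split; [apply dom_id1 | apply cod_id1].
  - apply word_ok_cons in H as (Ha & <- & Hw). destruct (cells_ok Ha) as ((D & C) & _).
    destruct (IH _ Hw) as [IH1 IH2]. simpl.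
    assert (E : dom1 (fst (atom a)) = cod1 (word1 d w)) by congruence.
    split; [rewrite dom_comp1 | rewrite cod_comp1]; auto.
Qed.

Lemma word_ok_app x c w1 d w2 : word_ok x c w1 = true -> word_ok d x w2 = true ->
  word_ok d c (w1 ++ w2) = true.
Proof.
  revert c; induction w1 as [|a w1 IH]; intros c H1 H2; simpl in *.
  - apply Nat.eqb_eq in H1; subst; auto.
  - apply andb_true_iff in H1 as [H H3]. rewrite H. simpl. eauto.
Qed.

Lemma word1_app x c w1 d w2 : word_ok x c w1 = true -> word_ok d x w2 = true ->
  word1 d (w1 ++ w2) = comp1 (word1 x w1) (word1 d w2).
Proof.
  revert c; induction w1 as [|a w1 IH]; intros c H1 H2.
  - simpl in H1. apply Nat.eqb_eq in H1; subst. simpl.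
    destruct (word1_hom H2) as [_ C]. rewrite <- C. now rewrite comp1_id_l.
  - apply word_ok_cons in H1 as (Ha & _ & Hw). simpl. rewrite (IH _ Hw H2).
    destruct (cells_ok Ha) as ((D & _) & _).
    destruct (word1_hom Hw) as [D1 C1]. destruct (word1_hom H2) as [D2 C2].
    apply comp1A; congruence.
Qed.

Definition typed (a : C2 K) (d c : nat) (s t : list nat) :=
  cell2 a (word1 d s) (word1 d t) /\ word_ok d c s = true /\ word_ok d c t = true.
(* Bars are identities only up to absorption. *)
Definition absorbs (a : C2 K) (d : nat) (s t : list nat) :=
  word2 d t ⋅ a = a /\ a ⋅ word2 d s = a.

Lemma typed_dom_cod a d c s t b x s' t' :
  typed a x c s t -> typed b d x s' t' -> dom1 (src2 a) = cod1 (src2 b).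
Proof.
  intros ((S1 & _) & W1 & _) ((S2 & _) & W2 & _).
  rewrite S1, S2, (proj1 (word1_hom W1)), (proj2 (word1_hom W2)). reflexivity.
Qed.

Lemma typed_hcomp a x c sa ta b d sb tb : typed a x c sa ta -> typed b d x sb tb ->
  typed (hcomp a b) d c (sa ++ sb) (ta ++ tb).
Proof.
  intros Ta Tb. pose proof (typed_dom_cod Ta Tb) as E.
  destruct Ta as ((S1 & T1) & W1 & W2), Tb as ((S2 & T2) & W3 & W4).
  split; [split|split]; eauto using word_ok_app.
  - rewrite src_hcomp, S1, S2 by exact E. symmetry; eapply word1_app; eauto.
  - rewrite tgt_hcomp, T1, T2 by exact E. symmetry; eapply word1_app; eauto.
Qed.

Lemma typed_vcomp a d c s1 t b s : typed a d c s1 t -> typed b d c s s1 -> typed (a ⋅ b) d c s t.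
Proof.
  intros ((S1 & T1) & W1 & W2) ((S2 & T2) & W3 & W4).
  assert (E : src2 a = tgt2 b) by congruence.
  split; [split|split]; auto.
  - rewrite src_vcomp by exact E; auto.
  - rewrite tgt_vcomp by exact E; auto.
Qed.

Lemma typed_interchange a x c s1 t1 b s0 a' d s1' t1' b' s0' :
  typed a x c s1 t1 -> typed b x c s0 s1 -> typed a' d x s1' t1' -> typed b' d x s0' s1' ->
  hcomp (a ⋅ b) (a' ⋅ b') = hcomp a a' ⋅ hcomp b b'.
Proof.
  intros Ta Tb Ta' Tb'. pose proof (typed_dom_cod Ta Ta') as E.
  destruct Ta as ((S1 & _) & _), Tb as ((_ & T2) & _), Ta' as ((S3 & _) & _), Tb' as ((_ & T4) & _).
  apply interchange; congruence.
Qed.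

Lemma typed_hcompA a y c sa ta b x sb tb e d se te :
  typed a y c sa ta -> typed b x y sb tb -> typed e d x se te ->
  hcomp a (hcomp b e) = hcomp (hcomp a b) e.
Proof.
  intros Ta Tb Te. apply hcompA; eapply typed_dom_cod; eauto.
Qed.

Lemma typed_vcompA a d c s1 t b s2 e s3 :
  typed a d c s1 t -> typed b d c s2 s1 -> typed e d c s3 s2 -> a ⋅ (b ⋅ e) = (a ⋅ b) ⋅ e.
Proof.
  intros ((S1 & _) & _) ((S2 & T2) & _) ((_ & T3) & _). apply vcompA; congruence.
Qed.

Lemma typed_bar a : a < length (sig_cells Sg) ->
  typed (snd (atom a)) (cell_dom Sg a) (cell_cod Sg a) [a] [a].
Proof.
  intros Ha. destruct (cells_ok Ha) as ((D & C) & (S1 & T1) & _).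
  assert (E : word1 (cell_dom Sg a) [a] = fst (atom a)).
  { simpl. rewrite <- D. apply comp1_id_r. }
  split; [split|split]; try congruence; simpl;
    rewrite (proj2 (Nat.ltb_lt _ _) Ha), !Nat.eqb_refl; reflexivity.
Qed.

Lemma typed_word2 d c w : word_ok d c w = true -> typed (word2 d w) d c w w.
Proof.
  revert c; induction w as [|a w IH]; intros c H.
  - simpl in H. apply Nat.eqb_eq in H; subst.
    split; [split|split]; simpl; rewrite ?src_id2, ?tgt_id2, ?Nat.eqb_refl; auto.
  - apply word_ok_cons in H as (Ha & <- & Hw).
    exact (typed_hcomp (typed_bar Ha) (IH _ Hw)).
Qed.

Lemma word2_idem d c w : word_ok d c w = true -> word2 d w ⋅ word2 d w = word2 d w.
Proof.
  revert c; induction w as [|a w IH]; intros c H.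
  - simpl. pose proof (vcomp_id_l (id2 (id1 (ob d)))) as E. now rewrite tgt_id2 in E.
  - apply word_ok_cons in H as (Ha & _ & Hw). simpl.
    rewrite <- (typed_interchange (typed_bar Ha) (typed_bar Ha) (typed_word2 Hw) (typed_word2 Hw)).
    rewrite (IH _ Hw). destruct (cells_ok Ha) as (_ & _ & I). now rewrite I.
Qed.

Lemma word2_app x c w1 d w2 : word_ok x c w1 = true -> word_ok d x w2 = true ->
  word2 d (w1 ++ w2) = hcomp (word2 x w1) (word2 d w2).
Proof.
  revert c; induction w1 as [|a w1 IH]; intros c H1 H2.
  - simpl in H1. apply Nat.eqb_eq in H1; subst. simpl.
    destruct (typed_word2 H2) as ((S1 & _) & W1 & _).
    pose proof (hcomp_id_l (word2 d w2)) as E. now rewrite S1, (proj2 (word1_hom W1)) in E.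
  - apply word_ok_cons in H1 as (Ha & _ & Hw). simpl.
    rewrite (IH _ Hw H2). eapply typed_hcompA; eauto using typed_bar, typed_word2.
Qed.

Lemma absorbs_word2 d c w : word_ok d c w = true -> absorbs (word2 d w) d w w.
Proof. intros H; split; eapply word2_idem; eauto. Qed.

Lemma typed_gen j : j < length (sig_gens Sg) ->
  typed (gen j) (gen_dom j) (gen_cod j) (gen_src j) (gen_tgt j).
Proof. intros H. destruct (gens_ok H) as (W1 & W2 & C & _). split; auto. Qed.

Lemma absorbs_gen j : j < length (sig_gens Sg) ->
  absorbs (gen j) (gen_dom j) (gen_src j) (gen_tgt j).
Proof. intros H. destruct (gens_ok H) as (_ & _ & _ & A). exact A. Qed.

Lemma typed_src_ok a d c s t : typed a d c s t -> word_ok d c s = true.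
Proof. intros (_ & W & _); auto. Qed.
Lemma typed_tgt_ok a d c s t : typed a d c s t -> word_ok d c t = true.
Proof. intros (_ & _ & W); auto. Qed.

Lemma absorbs_hcomp a x c sa ta b d sb tb :
  typed a x c sa ta -> absorbs a x sa ta -> typed b d x sb tb -> absorbs b d sb tb ->
  absorbs (hcomp a b) d (sa ++ sb) (ta ++ tb).
Proof.
  intros Ta [A1 A2] Tb [B1 B2].
  pose proof (typed_src_ok Ta). pose proof (typed_tgt_ok Ta).
  pose proof (typed_src_ok Tb). pose proof (typed_tgt_ok Tb). split.
  - rewrite (word2_app H0 H2), <- (typed_interchange (typed_word2 H0) Ta (typed_word2 H2) Tb).
    congruence.
  - rewrite (word2_app H H1), <- (typed_interchange Ta (typed_word2 H) Tb (typed_word2 H1)).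
    congruence.
Qed.

Lemma absorbs_vcomp a d c s1 t b s :
  typed a d c s1 t -> absorbs a d s1 t -> typed b d c s s1 -> absorbs b d s s1 ->
  absorbs (a ⋅ b) d s t.
Proof.
  intros Ta [A1 A2] Tb [B1 B2]. split.
  - rewrite (typed_vcompA (typed_word2 (typed_tgt_ok Ta)) Ta Tb). congruence.
  - rewrite <- (typed_vcompA Ta Tb (typed_word2 (typed_src_ok Tb))). congruence.
Qed.

Lemma layer_ok_parts d c p j q : layer_ok d c (p, j, q) = true ->
  j < length (sig_gens Sg) /\ word_ok d (gen_dom j) q = true /\ word_ok (gen_cod j) c p = true.
Proof.
  simpl. intros H. apply andb_true_iff in H as [H H3]. apply andb_true_iff in H as [H1 H2].
  apply Nat.ltb_lt in H1. auto.
Qed.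

Lemma typed_layer2 d c L : layer_ok d c L = true ->
  typed (layer2 d L) d c (layer_src L) (layer_tgt L) /\ absorbs (layer2 d L) d (layer_src L) (layer_tgt L).
Proof.
  destruct L as [[p j] q]. intros H. apply layer_ok_parts in H as (Hj & Hq & Hp).
  pose proof (typed_hcomp (typed_gen Hj) (typed_word2 Hq)) as T.
  split; [exact (typed_hcomp (typed_word2 Hp) T)|].
  apply (absorbs_hcomp (typed_word2 Hp) (absorbs_word2 Hp) T).
  exact (absorbs_hcomp (typed_gen Hj) (absorbs_gen Hj) (typed_word2 Hq) (absorbs_word2 Hq)).
Qed.

(* [a m b] is [a] after [b] and [b] after [a]. *)
Lemma slide_right a x c sa ta b d y sb tb m :
  typed a x c sa ta -> absorbs a x sa ta -> typed b d y sb tb -> absorbs b d sb tb ->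
  word_ok y x m = true ->
  hcomp a (hcomp (word2 y m) (word2 d tb)) ⋅ hcomp (word2 x sa) (hcomp (word2 y m) b)
  = hcomp a (hcomp (word2 y m) b).
Proof.
  intros Ta [A1 A2] Tb [B1 B2] Hm.
  pose proof (typed_word2 Hm) as TM. pose proof (typed_word2 (typed_tgt_ok Tb)) as TT.
  rewrite <- (typed_interchange Ta (typed_word2 (typed_src_ok Ta)) (typed_hcomp TM TT) (typed_hcomp TM Tb)).
  rewrite <- (typed_interchange TM TM TT Tb), (word2_idem Hm). congruence.
Qed.

Lemma slide_left a x c sa ta b d y sb tb m :
  typed a x c sa ta -> absorbs a x sa ta -> typed b d y sb tb -> absorbs b d sb tb ->
  word_ok y x m = true ->
  hcomp (word2 x ta) (hcomp (word2 y m) b) ⋅ hcomp a (hcomp (word2 y m) (word2 d sb))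
  = hcomp a (hcomp (word2 y m) b).
Proof.
  intros Ta [A1 A2] Tb [B1 B2] Hm.
  pose proof (typed_word2 Hm) as TM. pose proof (typed_word2 (typed_src_ok Tb)) as TS.
  rewrite <- (typed_interchange (typed_word2 (typed_tgt_ok Ta)) Ta (typed_hcomp TM Tb) (typed_hcomp TM TS)).
  rewrite <- (typed_interchange TM TM Tb TS), (word2_idem Hm). congruence.
Qed.

Lemma word2_whisker_vcomp P x c A d sA tA B sB :
  word_ok x c P = true -> typed A d x sA tA -> typed B d x sB sA ->
  hcomp (word2 x P) A ⋅ hcomp (word2 x P) B = hcomp (word2 x P) (A ⋅ B).
Proof.
  intros HP TA TB. rewrite <- (typed_interchange (typed_word2 HP) (typed_word2 HP) TA TB).
  now rewrite (word2_idem HP).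
Qed.

(* Generator [a] to the left of generator [b], separated by the word [m]. *)
Lemma layer2_interchange d c p a m b q :
  a < length (sig_gens Sg) -> b < length (sig_gens Sg) -> word_ok (gen_cod a) c p = true ->
  word_ok (gen_cod b) (gen_dom a) m = true -> word_ok d (gen_dom b) q = true ->
  layer2 d (p, a, m ++ gen_tgt b ++ q) ⋅ layer2 d (p ++ gen_src a ++ m, b, q) =
  layer2 d (p ++ gen_tgt a ++ m, b, q) ⋅ layer2 d (p, a, m ++ gen_src b ++ q).
Proof.
  intros Ha Hb Hp Hm Hq.
  destruct (gens_ok Ha) as (WSa & WTa & _), (gens_ok Hb) as (WSb & WTb & _).
  pose proof (typed_hcomp (typed_gen Hb) (typed_word2 Hq)) as Tb.
  pose proof (absorbs_hcomp (typed_gen Hb) (absorbs_gen Hb) (typed_word2 Hq) (absorbs_word2 Hq)) as Ab.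
  pose proof (typed_gen Ha) as Ta. pose proof (absorbs_gen Ha) as Aa.
  pose proof (typed_word2 Hm) as TM. pose proof (typed_word2 Hp) as TP.
  simpl layer2.
  rewrite (word2_app Hm (word_ok_app WTb Hq)), (word2_app Hm (word_ok_app WSb Hq)).
  rewrite (word2_app Hp (word_ok_app WSa Hm)), (word2_app WSa Hm).
  rewrite (word2_app Hp (word_ok_app WTa Hm)), (word2_app WTa Hm).
  rewrite <- (typed_hcompA TP (typed_hcomp (typed_word2 WSa) TM) Tb),
    <- (typed_hcompA (typed_word2 WSa) TM Tb).
  rewrite <- (typed_hcompA TP (typed_hcomp (typed_word2 WTa) TM) Tb),
    <- (typed_hcompA (typed_word2 WTa) TM Tb).
  rewrite (word2_whisker_vcomp Hp (typed_hcomp Ta (typed_hcomp TM (typed_word2 (word_ok_app WTb Hq))))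
             (typed_hcomp (typed_word2 WSa) (typed_hcomp TM Tb))).
  rewrite (word2_whisker_vcomp Hp (typed_hcomp (typed_word2 WTa) (typed_hcomp TM Tb))
             (typed_hcomp Ta (typed_hcomp TM (typed_word2 (word_ok_app WSb Hq))))).
  now rewrite (slide_right Ta Aa Tb Ab Hm), (slide_left Ta Aa Tb Ab Hm).
Qed.

Lemma swap_layers_sound d c X Y Y' X' : swap_layers Sg X Y = Some (Y', X') ->
  layer_ok d c X = true -> layer_ok d c Y = true -> layer2 d X ⋅ layer2 d Y = layer2 d Y' ⋅ layer2 d X'.
Proof.
  destruct X as [[p1 j1] q1], Y as [[p2 j2] q2]. unfold swap_layers.
  intros E HX HY. apply layer_ok_parts in HX as (Hj1 & Hq1 & Hp1).
  apply layer_ok_parts in HY as (Hj2 & Hq2 & Hp2).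
  destruct (_ <=? _).
  - set (m := skipn _ p2) in E. clearbody m.
    destruct (word_eqb p2 _) eqn:E1, (word_eqb q1 _) eqn:E2, (word_ok _ _ m) eqn:E3; try discriminate.
    injection E as <- <-. apply word_eqb_eq in E1, E2. subst p2 q1.
    now apply layer2_interchange with (c := c).
  - destruct (_ <=? _); [|discriminate].
    set (m := skipn _ p1) in E. clearbody m.
    destruct (word_eqb p1 _) eqn:E1, (word_eqb q2 _) eqn:E2, (word_ok _ _ m) eqn:E3; try discriminate.
    injection E as <- <-. apply word_eqb_eq in E1, E2. subst p1 q2.
    symmetry. now apply layer2_interchange with (c := c).
Qed.

Lemma chain_ok_cons d c w L ls : chain_ok d c w (L :: ls) = true ->
  layer_ok d c L = true /\ layer_src L = chain_tgt w ls /\ chain_ok d c w ls = true.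
Proof.
  simpl. intros H. apply andb_true_iff in H as [H H3]. apply andb_true_iff in H as [H1 H2].
  apply word_eqb_eq in H2. auto.
Qed.

Lemma typed_chain2 d c w ls : chain_ok d c w ls = true ->
  typed (chain2 d w ls) d c w (chain_tgt w ls) /\ absorbs (chain2 d w ls) d w (chain_tgt w ls).
Proof.
  induction ls as [|L ls IH]; intros H.
  - simpl in *. split; [apply typed_word2 | eapply absorbs_word2]; eauto.
  - apply chain_ok_cons in H as (HL & E & Hl). destruct (IH Hl) as [T A].
    destruct (typed_layer2 HL) as [TL AL]. rewrite E in TL, AL. simpl.
    split; [eapply typed_vcomp | eapply absorbs_vcomp]; eauto.
Qed.

Lemma swap_at_sound d c w n : forall ls ls', swap_at Sg n ls = Some ls' ->
  chain_ok d c w ls = true -> chain_ok d c w ls' = true -> chain2 d w ls = chain2 d w ls'.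
Proof.
  induction n as [|n IH]; intros ls ls' Hs H1 H2.
  - destruct ls as [|X [|Y l]]; simpl in Hs; try discriminate.
    destruct (swap_layers Sg X Y) as [[Y' X']|] eqn:E; [|discriminate].
    injection Hs as <-.
    apply chain_ok_cons in H1 as (HX & E1 & H1). apply chain_ok_cons in H1 as (HY & E2 & H1).
    apply chain_ok_cons in H2 as (HY' & E3 & H2). apply chain_ok_cons in H2 as (HX' & E4 & H2).
    destruct (typed_layer2 HX) as [TX _], (typed_layer2 HY) as [TY _].
    destruct (typed_layer2 HY') as [TY' _], (typed_layer2 HX') as [TX' _].
    destruct (typed_chain2 H1) as [TL _].
    rewrite E1 in TX. rewrite E2 in TY. rewrite E3 in TY'. rewrite E4 in TX'. simpl in *.
    rewrite (typed_vcompA TX TY TL), (typed_vcompA TY' TX' TL).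
    now rewrite (swap_layers_sound E HX HY).
  - destruct ls as [|Z l]; simpl in Hs; try discriminate.
    destruct (swap_at Sg n l) as [l'|] eqn:E; [|discriminate].
    injection Hs as <-.
    apply chain_ok_cons in H1 as (_ & _ & H1). apply chain_ok_cons in H2 as (_ & _ & H2).
    simpl. rewrite (IH l l'); auto.
Qed.

Lemma run_swaps_sound d c w ns : forall ls ls', run_swaps Sg ns ls = Some ls' ->
  swaps_ok Sg d c w ns ls = true -> chain2 d w ls = chain2 d w ls'.
Proof.
  induction ns as [|n ns IH]; intros ls ls' Hr Hok; simpl in *.
  - congruence.
  - apply andb_true_iff in Hok as [H1 H2].
    destruct (swap_at Sg n ls) as [l|] eqn:E; [|discriminate].
    pose proof (IH _ _ Hr H2) as IH'. destruct ns; simpl in H2; apply andb_true_iff in H2 as [H2 _];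
      rewrite (swap_at_sound E H1 H2); exact IH'.
Qed.

Lemma chain_tgt_app w l1 l2 : chain_tgt (chain_tgt w l2) l1 = chain_tgt w (l1 ++ l2).
Proof. now destruct l1. Qed.

Lemma chain_ok_app d c w l1 l2 : chain_ok d c w (l1 ++ l2) = true ->
  chain_ok d c (chain_tgt w l2) l1 = true /\ chain_ok d c w l2 = true.
Proof.
  induction l1 as [|L l1 IH]; intros H.
  - simpl in *. split; auto. exact (typed_tgt_ok (proj1 (typed_chain2 H))).
  - simpl in H. apply andb_true_iff in H as [H H3]. destruct (IH H3) as [A B]. split; auto.
    simpl. now rewrite A, chain_tgt_app, H.
Qed.

Lemma chain_ok_app_intro d c w l1 l2 :
  chain_ok d c (chain_tgt w l2) l1 = true -> chain_ok d c w l2 = true ->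
  chain_ok d c w (l1 ++ l2) = true.
Proof.
  induction l1 as [|L l1 IH]; intros H1 H2; simpl in *; auto.
  apply andb_true_iff in H1 as [H H3]. now rewrite (IH H3 H2), <- chain_tgt_app, H.
Qed.

Lemma chain2_app d c w l1 l2 : chain_ok d c w (l1 ++ l2) = true ->
  chain2 d w (l1 ++ l2) = chain2 d (chain_tgt w l2) l1 ⋅ chain2 d w l2.
Proof.
  induction l1 as [|L l1 IH]; intros H.
  - simpl in *. now destruct (typed_chain2 H) as [_ [A _]].
  - pose proof H as H0. apply chain_ok_cons in H as (HL & E & H).
    destruct (chain_ok_app H) as [Ha Hb]. simpl. rewrite (IH H).
    destruct (typed_layer2 HL) as [TL _], (typed_chain2 Ha) as [Ta _], (typed_chain2 Hb) as [Tb _].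
    rewrite E, <- chain_tgt_app in TL. apply (typed_vcompA TL Ta Tb).
Qed.

Lemma layer_ok_whisker_l d x c P L : layer_ok d x L = true -> word_ok x c P = true ->
  layer_ok d c (whisker_l P L) = true.
Proof.
  destruct L as [[p j] q]. intros H HP. apply layer_ok_parts in H as (Hj & Hq & Hp). simpl.
  now rewrite (proj2 (Nat.ltb_lt _ _) Hj), Hq, (word_ok_app HP Hp).
Qed.

Lemma layer_ok_whisker_r d x c Q L : layer_ok x c L = true -> word_ok d x Q = true ->
  layer_ok d c (whisker_r Q L) = true.
Proof.
  destruct L as [[p j] q]. intros H HQ. apply layer_ok_parts in H as (Hj & Hq & Hp). simpl.
  now rewrite (proj2 (Nat.ltb_lt _ _) Hj), Hp, (word_ok_app Hq HQ).
Qed.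

Lemma layer2_whisker_l d x c P L : layer_ok d x L = true -> word_ok x c P = true ->
  hcomp (word2 x P) (layer2 d L) = layer2 d (whisker_l P L).
Proof.
  destruct L as [[p j] q]. intros H HP. apply layer_ok_parts in H as (Hj & Hq & Hp). simpl.
  rewrite (word2_app HP Hp).
  apply (typed_hcompA (typed_word2 HP) (typed_word2 Hp) (typed_hcomp (typed_gen Hj) (typed_word2 Hq))).
Qed.

Lemma layer2_whisker_r d x c Q L : layer_ok x c L = true -> word_ok d x Q = true ->
  hcomp (layer2 x L) (word2 d Q) = layer2 d (whisker_r Q L).
Proof.
  destruct L as [[p j] q]. intros H HQ. apply layer_ok_parts in H as (Hj & Hq & Hp). simpl.
  rewrite (word2_app Hq HQ).
  rewrite <- (typed_hcompA (typed_word2 Hp) (typed_hcomp (typed_gen Hj) (typed_word2 Hq)) (typed_word2 HQ)).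
  now rewrite <- (typed_hcompA (typed_gen Hj) (typed_word2 Hq) (typed_word2 HQ)).
Qed.

Lemma layer_src_whisker_l P L : layer_src (whisker_l P L) = P ++ layer_src L.
Proof. destruct L as [[p j] q]; simpl. now rewrite !app_assoc. Qed.
Lemma layer_tgt_whisker_l P L : layer_tgt (whisker_l P L) = P ++ layer_tgt L.
Proof. destruct L as [[p j] q]; simpl. now rewrite !app_assoc. Qed.
Lemma layer_src_whisker_r Q L : layer_src (whisker_r Q L) = layer_src L ++ Q.
Proof. destruct L as [[p j] q]; simpl. now rewrite !app_assoc. Qed.
Lemma layer_tgt_whisker_r Q L : layer_tgt (whisker_r Q L) = layer_tgt L ++ Q.
Proof. destruct L as [[p j] q]; simpl. now rewrite !app_assoc. Qed.

Lemma chain2_whisker_l d x c w P ls : chain_ok d x w ls = true -> word_ok x c P = true ->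
  hcomp (word2 x P) (chain2 d w ls) = chain2 d (P ++ w) (map (whisker_l P) ls) /\
  chain_ok d c (P ++ w) (map (whisker_l P) ls) = true /\
  chain_tgt (P ++ w) (map (whisker_l P) ls) = P ++ chain_tgt w ls.
Proof.
  intros H HP. induction ls as [|L ls IH].
  - simpl in *. split; [symmetry; apply (word2_app HP H)|]. split; auto. apply (word_ok_app HP H).
  - apply chain_ok_cons in H as (HL & E & H). destruct (IH H) as (I1 & I2 & I3).
    destruct (typed_layer2 HL) as [TL _], (typed_chain2 H) as [TI _]. rewrite E in TL.
    split; [|split]; simpl.
    + now rewrite <- (word2_whisker_vcomp HP TL TI), I1, (layer2_whisker_l HL HP).
    + now rewrite (layer_ok_whisker_l HL HP), I2, I3, layer_src_whisker_l, E, word_eqb_refl.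
    + apply layer_tgt_whisker_l.
Qed.

Lemma chain2_whisker_r d x c w Q ls : chain_ok x c w ls = true -> word_ok d x Q = true ->
  hcomp (chain2 x w ls) (word2 d Q) = chain2 d (w ++ Q) (map (whisker_r Q) ls) /\
  chain_ok d c (w ++ Q) (map (whisker_r Q) ls) = true /\
  chain_tgt (w ++ Q) (map (whisker_r Q) ls) = chain_tgt w ls ++ Q.
Proof.
  intros H HQ. induction ls as [|L ls IH].
  - simpl in *. split; [symmetry; apply (word2_app H HQ)|]. split; auto. apply (word_ok_app H HQ).
  - apply chain_ok_cons in H as (HL & E & H). destruct (IH H) as (I1 & I2 & I3).
    destruct (typed_layer2 HL) as [TL _], (typed_chain2 H) as [TI _]. rewrite E in TL.
    pose proof (typed_word2 HQ) as TQ.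
    split; [|split]; simpl.
    + rewrite <- (word2_idem HQ) at 1. rewrite (typed_interchange TL TI TQ TQ), I1.
      now rewrite (layer2_whisker_r HL HQ).
    + now rewrite (layer_ok_whisker_r HL HQ), I2, I3, layer_src_whisker_r, E, word_eqb_refl.
    + apply layer_tgt_whisker_r.
Qed.

Lemma chain2_whisker d c P Q r0 c0 w0 ls :
  chain_ok r0 c0 w0 ls = true -> word_ok d r0 Q = true -> word_ok c0 c P = true ->
  chain2 d (P ++ w0 ++ Q) (whisker P Q ls) = hcomp (word2 c0 P) (hcomp (chain2 r0 w0 ls) (word2 d Q)) /\
  chain_ok d c (P ++ w0 ++ Q) (whisker P Q ls) = true /\
  chain_tgt (P ++ w0 ++ Q) (whisker P Q ls) = P ++ chain_tgt w0 ls ++ Q.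
Proof.
  intros H HQ HP. destruct (chain2_whisker_r H HQ) as (R1 & R2 & R3).
  destruct (chain2_whisker_l R2 HP) as (L1 & L2 & L3). unfold whisker.
  split; [|split]; auto.
  - now rewrite <- L1, <- R1.
  - now rewrite L3, R3.
Qed.

Lemma chain2_gen j : j < length (sig_gens Sg) ->
  chain2 (gen_dom j) (gen_src j) [([], j, [])] = gen j.
Proof.
  intros Hj. destruct (gens_ok Hj) as (WS & _ & (S1 & _) & _). cbn [fst word] in S1. simpl.
  pose proof (hcomp_id_r (gen j)) as E. rewrite S1, (proj1 (word1_hom WS)) in E.
  pose proof (hcomp_id_l (gen j)) as E'. rewrite S1, (proj2 (word1_hom WS)) in E'.
  rewrite E, E'. exact (proj2 (absorbs_gen Hj)).
Qed.

Lemma chain2_hcomp x c sa ta la d sb tb lb :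
  chain_ok x c sa la = true -> chain_tgt sa la = ta ->
  chain_ok d x sb lb = true -> chain_tgt sb lb = tb ->
  chain_ok d c (sa ++ sb) (map (whisker_r tb) la ++ map (whisker_l sa) lb) = true /\
  chain_tgt (sa ++ sb) (map (whisker_r tb) la ++ map (whisker_l sa) lb) = ta ++ tb /\
  chain2 d (sa ++ sb) (map (whisker_r tb) la ++ map (whisker_l sa) lb)
  = hcomp (chain2 x sa la) (chain2 d sb lb).
Proof.
  intros A1 A2 B1 B2.
  destruct (typed_chain2 A1) as [TA [_ AA2]], (typed_chain2 B1) as [TB [AB1 _]].
  rewrite A2 in TA. rewrite B2 in TB, AB1.
  destruct (chain2_whisker_r A1 (typed_tgt_ok TB)) as (R1 & R2 & R3).
  destruct (chain2_whisker_l B1 (typed_src_ok TA)) as (L1 & L2 & L3).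
  rewrite B2 in L3. rewrite A2 in R3.
  assert (C : chain_ok d c (sa ++ sb) (map (whisker_r tb) la ++ map (whisker_l sa) lb) = true).
  { apply chain_ok_app_intro; auto. now rewrite L3. }
  split; [|split]; auto.
  - now rewrite <- chain_tgt_app, L3.
  - rewrite (chain2_app C), L3, <- R1, <- L1.
    rewrite <- (typed_interchange TA (typed_word2 (typed_src_ok TA)) (typed_word2 (typed_tgt_ok TB)) TB).
    now rewrite AA2, AB1.
Qed.

Lemma term_chain_sound t : forall s u d c, term_type Sg t = Some (s, u, d, c) ->
  chain_ok d c s (term_chain Sg t) = true /\ chain_tgt s (term_chain Sg t) = u /\
  chain2 d s (term_chain Sg t) = term2 t.
Proof.
  induction t as [j|i|a IHa b IHb|a IHa b IHb]; intros s u d c H; simpl in H; cbn [term_chain term2].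
  - destruct (j <? _) eqn:Hj; [|discriminate]. injection H as <- <- <- <-.
    apply Nat.ltb_lt in Hj. destruct (gens_ok Hj) as (WS & _).
    simpl. rewrite app_nil_r, (proj2 (Nat.ltb_lt _ _) Hj), !Nat.eqb_refl, word_eqb_refl, WS.
    split; [|split]; [reflexivity | now rewrite app_nil_r | now apply chain2_gen].
  - destruct (i <? _) eqn:Hi; [|discriminate]. injection H as <- <- <- <-.
    apply Nat.ltb_lt in Hi. simpl. split; [|split]; auto.
    + now rewrite (proj2 (Nat.ltb_lt _ _) Hi), !Nat.eqb_refl.
    + destruct (cells_ok Hi) as ((D & _) & (S1 & _) & _). pose proof (hcomp_id_r (snd (atom i))) as E.
      now rewrite S1, D in E.
  - destruct (term_type Sg a) as [[[[sa ta] da] ca]|]; [|discriminate].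
    destruct (term_type Sg b) as [[[[sb tb] db] cb]|]; [|discriminate].
    destruct (word_eqb sa tb && (da =? db) && (ca =? cb)) eqn:E; [|discriminate].
    apply andb_true_iff in E as [E E3]. apply andb_true_iff in E as [E1 E2].
    apply word_eqb_eq in E1. apply Nat.eqb_eq in E2, E3. subst.
    injection H as <- <- <- <-.
    destruct (IHa _ _ _ _ eq_refl) as (A1 & A2 & A3), (IHb _ _ _ _ eq_refl) as (B1 & B2 & B3).
    rewrite <- B2 in A1. split; [|split].
    + now apply chain_ok_app_intro.
    + now rewrite <- chain_tgt_app, B2.
    + now rewrite (chain2_app (chain_ok_app_intro A1 B1)), B2, A3, B3.
  - destruct (term_type Sg a) as [[[[sa ta] da] ca]|]; [|discriminate].
    destruct (term_type Sg b) as [[[[sb tb] db] cb]|]; [|discriminate].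
    destruct (da =? cb) eqn:E; [|discriminate]. apply Nat.eqb_eq in E. subst.
    injection H as <- <- <- <-.
    destruct (IHa _ _ _ _ eq_refl) as (A1 & A2 & A3), (IHb _ _ _ _ eq_refl) as (B1 & B2 & B3).
    rewrite <- A3, <- B3. exact (chain2_hcomp A1 A2 B1 B2).
Qed.

Definition rule_valid (r : rule) :=
  rule_wf Sg r = true /\
  chain2 (rule_dom r) (rule_src r) (rule_lhs r) = chain2 (rule_dom r) (rule_src r) (rule_rhs r).

Lemma rule_of_terms_valid t1 t2 : terms_parallel Sg t1 t2 = true -> term2 t1 = term2 t2 ->
  rule_valid (rule_of_terms Sg t1 t2).
Proof.
  unfold terms_parallel, rule_of_terms, term_src, term_dom, term_cod, rule_valid, rule_wf. simpl.
  destruct (term_type Sg t1) as [[[[s t] d] c]|] eqn:E1; [|discriminate].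
  destruct (term_type Sg t2) as [[[[s' t'] d'] c']|] eqn:E2; [|discriminate].
  intros H Heq. apply andb_true_iff in H as [H H3]. apply andb_true_iff in H as [H H2].
  apply andb_true_iff in H as [H H1]. apply word_eqb_eq in H, H1. apply Nat.eqb_eq in H2, H3. subst.
  destruct (term_chain_sound E1) as (A1 & A2 & A3), (term_chain_sound E2) as (B1 & B2 & B3).
  rewrite A1, B1, A2, B2, word_eqb_refl. split; auto. congruence.
Qed.

Lemma rule_sym_valid r : rule_valid r -> rule_valid (rule_sym r).
Proof.
  unfold rule_valid, rule_sym, rule_wf; simpl. intros [H E]. split; auto.
  apply andb_true_iff in H as [H H3]. apply andb_true_iff in H as [H1 H2].
  apply word_eqb_eq in H3. now rewrite H1, H2, H3, word_eqb_refl.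
Qed.

Lemma rule_apply_sound r d c w ls n P Q : rule_valid r -> rule_applies Sg d c w ls n P Q r = true ->
  chain2 d w ls = chain2 d w (rule_apply ls n P Q r).
Proof.
  intros [Hr Eq] H. unfold rule_applies, rule_wf in *.
  repeat rewrite andb_true_iff in H. repeat rewrite andb_true_iff in Hr.
  destruct H as (((((Hls & Hres) & Hlhs) & Htgt) & HQ) & HP), Hr as ((Hr1 & Hr2) & Hr3).
  apply layers_eqb_eq in Hlhs. apply word_eqb_eq in Htgt, Hr3.
  assert (Els : ls = firstn n ls ++ whisker P Q (rule_lhs r) ++ skipn (n + length (rule_lhs r)) ls).
  { rewrite <- (firstn_skipn n ls) at 1. f_equal.
    rewrite <- (firstn_skipn (length (rule_lhs r)) (skipn n ls)) at 1. f_equal; auto.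
    now rewrite skipn_skipn, Nat.add_comm. }
  unfold rule_apply in *.
  set (l1 := firstn n ls) in *. set (l2 := skipn (n + length (rule_lhs r)) ls) in *.
  rewrite Els in Hls. rewrite Els at 1.
  destruct (chain2_whisker Hr1 HQ HP) as (W1 & _ & W3).
  destruct (chain2_whisker Hr2 HQ HP) as (W4 & _ & W6).
  rewrite (chain2_app Hls), (chain2_app Hres).
  destruct (chain_ok_app Hls) as [_ Hls2], (chain_ok_app Hres) as [_ Hres2].
  rewrite (chain2_app Hls2), (chain2_app Hres2).
  rewrite Htgt, <- !chain_tgt_app, Htgt.
  now rewrite W1, W3, W4, W6, Eq, Hr3.
Qed.

Lemma rewrite_chain_sound d c w ls r ls' : rule_valid r ->
  rewrite_chain Sg d c w ls r = Some ls' -> chain2 d w ls = chain2 d w ls'.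
Proof.
  intros Hr. unfold rewrite_chain.
  destruct (find_occurrence _ _ _) as [[[[ns n] P] Q]|]; [|discriminate].
  destruct (run_swaps Sg ns ls) as [l|] eqn:E; [|discriminate].
  destruct (swaps_ok Sg d c w ns ls) eqn:H1, (rule_applies Sg d c w l n P Q r) eqn:H2; try discriminate.
  intros H; injection H as <-.
  now rewrite (run_swaps_sound E H1), (rule_apply_sound Hr H2).
Qed.

Lemma interchange_eqb_sound d c w ls ls' : interchange_eqb Sg d c w ls ls' = true ->
  chain2 d w ls = chain2 d w ls'.
Proof.
  unfold interchange_eqb. destruct (align Sg ls' 0 (ls, [])) as [[_ ns]|]; [|discriminate].
  intros H. apply andb_true_iff in H as [H1 H2].
  destruct (run_swaps Sg ns ls) as [l|] eqn:E; [|discriminate].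
  apply layers_eqb_eq in H2. subst l. exact (run_swaps_sound E H1).
Qed.

Lemma term2_eq_of_chains t1 t2 : terms_parallel Sg t1 t2 = true ->
  chain2 (term_dom Sg t1) (term_src Sg t1) (term_chain Sg t1) =
  chain2 (term_dom Sg t1) (term_src Sg t1) (term_chain Sg t2) -> term2 t1 = term2 t2.
Proof.
  unfold terms_parallel, term_src, term_dom.
  destruct (term_type Sg t1) as [[[[s t] d] c]|] eqn:E1; [|discriminate].
  destruct (term_type Sg t2) as [[[[s' t'] d'] c']|] eqn:E2; [|discriminate].
  intros H Heq. apply andb_true_iff in H as [H H3]. apply andb_true_iff in H as [H H2].
  apply andb_true_iff in H as [H H1]. apply word_eqb_eq in H, H1. apply Nat.eqb_eq in H2, H3. subst.
  destruct (term_chain_sound E1) as (_ & _ & A3), (term_chain_sound E2) as (_ & _ & B3).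
  congruence.
Qed.

Lemma term2_cell t s u d c : term_type Sg t = Some (s, u, d, c) ->
  cell2 (term2 t) (word1 d s) (word1 d u).
Proof.
  intros H. destruct (term_chain_sound H) as (H1 & H2 & <-).
  destruct (typed_chain2 H1) as [(C & _) _]. now rewrite H2 in C.
Qed.

End Semantics.
(* The tactics below work in a context with hypotheses
   [cells_valid Sg ob (fun i => nth i atoms _)] and
   [gens_valid Sg ob _ (fun j => nth j gens _)]: an atom [u] occurs in a
   2-cell through its bar [snd u], every other factor must be in [gens]. *)

Ltac index_of x l :=
  lazymatch l with
  | x :: _ => constr:(0)
  | _ :: ?r => let n := index_of x r in constr:(S n)
  end.

Ltac reify_term atoms gens t :=
  lazymatch t with
  | hcomp ?a ?b =>
      let x := reify_term atoms gens a in let y := reify_term atoms gens b in constr:(THcomp x y)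
  | vcomp ?a ?b =>
      let x := reify_term atoms gens a in let y := reify_term atoms gens b in constr:(TVcomp x y)
  | snd ?u => let n := index_of u atoms in constr:(TCell n)
  | _ => let n := index_of t gens in constr:(TGen n)
  end.

Ltac reify t :=
  lazymatch goal with
  | _ : cells_valid _ _ (fun _ => nth _ ?atoms _),
    _ : gens_valid _ _ _ (fun _ => nth _ ?gens _) |- _ => reify_term atoms gens t
  end.

Ltac kbar_normalize T :=
  let T := eval cbv [wl wr lambar kcomp1 cmp1 cmp_mu cmp_eta] in T in eval cbn [fst snd] in T.

Ltac normalize_chains :=
  lazymatch goal with
  | |- @chain2 ?K ?Sg ?ob ?atom ?gen ?d ?w ?l1 = @chain2 _ _ _ _ _ _ _ ?l2 =>
      let d := eval vm_compute in d in let w := eval vm_compute in w in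
      let l1 := eval vm_compute in l1 in let l2 := eval vm_compute in l2 in
      change (@chain2 K Sg ob atom gen d w l1 = @chain2 K Sg ob atom gen d w l2)
  end.

Ltac string_diagram :=
  lazymatch goal with
  | Hc : cells_valid ?Sg ?ob ?atom, Hg : gens_valid _ _ _ ?gen |- ?G =>
      let G := kbar_normalize G in
      lazymatch G with
      | ?l = ?r =>
          let t1 := reify l in let t2 := reify r in
          change (term2 atom gen t1 = term2 atom gen t2);
          apply (term2_eq_of_chains Hc Hg); [vm_compute; reflexivity | normalize_chains]
      end
  end.

Ltac rewrite_by_rule Hr :=
  lazymatch goal with
  | Hc : cells_valid ?Sg _ _, Hg : gens_valid _ _ _ _
    |- @chain2 _ _ _ _ _ ?d ?w ?ls = _ =>
      lazymatch type of Hr with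
      | rule_valid _ _ _ _ ?r =>
          let res := eval vm_compute in (rewrite_chain Sg d (word_cod Sg d w) w ls r) in
          lazymatch res with
          | Some ?ls' =>
              refine (eq_trans (rewrite_chain_sound (c := word_cod Sg d w) (ls' := ls') Hc Hg Hr _) _);
              [vm_compute; reflexivity|]
          | None => fail "drewrite: no occurrence found"
          end
      end
  end.

Ltac rule_of H :=
  lazymatch goal with
  | Hc : cells_valid _ _ _, Hg : gens_valid _ _ _ _ |- _ =>
      let T := type of H in let T := kbar_normalize T in
      lazymatch T with
      | ?l = ?r =>
          let t1 := reify l in let t2 := reify r in
          constr:(rule_of_terms_valid Hc Hg (t1 := t1) (t2 := t2) eq_refl H)
      end
  end.

Tactic Notation "drewrite" constr(H) :=
  let Hr := rule_of H in rewrite_by_rule Hr.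
Tactic Notation "drewrite" "<-" constr(H) :=
  let Hr := rule_of H in rewrite_by_rule (rule_sym_valid Hr).

Ltac by_interchange :=
  lazymatch goal with
  | Hc : cells_valid ?Sg _ _, Hg : gens_valid _ _ _ _ |- @chain2 _ _ _ _ _ ?d ?w _ = _ =>
      first [ reflexivity
            | apply (interchange_eqb_sound Hc Hg (c := word_cod Sg d w)); vm_compute; reflexivity ]
  end.

Ltac diagram_cell2 X :=
  lazymatch goal with
  | Hc : cells_valid ?Sg ?ob ?atom, Hg : gens_valid _ _ _ ?gen |- _ =>
      let X' := kbar_normalize X in let tX := reify X' in
      let ty := eval vm_compute in (term_type Sg tX) in
      lazymatch ty with
      | Some (?s, ?u, ?d, ?c) =>
          constr:(term2_cell (ob := ob) Hc Hg (t := tX) (s := s) (u := u) (d := d) (c := c) eq_refl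
                  : cell2 X (word1 ob atom d s) (word1 ob atom d u))
      end
  end.

(** * The structures as string diagrams *)

Section Accessors.
Variables (K : TwoCat) (A A' : Ob K).
Variables (t : kb1 K) (mut etat : C2 K) (s : kb1 K) (mus etas lam : C2 K).
Variables (t' : kb1 K) (mut' etat' : C2 K) (s' : kb1 K) (mus' etas' lam' : C2 K).
Variables (v : kb1 K) (psi xi zeta : C2 K).

Lemma monad_assoc : is_monad A t mut etat -> mut ⋅ wl t mut = mut ⋅ wr mut t.
Proof. now intros (_ & _ & _ & H & _). Qed.
Lemma monad_unit_l : is_monad A t mut etat -> mut ⋅ wl t etat = snd t.
Proof. now intros (_ & _ & _ & _ & H & _). Qed.
Lemma monad_unit_r : is_monad A t mut etat -> mut ⋅ wr etat t = snd t.
Proof. now intros (_ & _ & _ & _ & _ & H). Qed.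

Hypothesis Hlam : is_wdl A t mut etat s mus etas lam.

Lemma wdl_monad_t : is_monad A t mut etat.
Proof. apply Hlam. Qed.
Lemma wdl_monad_s : is_monad A s mus etas.
Proof. apply Hlam. Qed.
Lemma wdl_mut : lam ⋅ wr mut s = wl s mut ⋅ wr lam t ⋅ wl t lam.
Proof. now destruct Hlam as (_ & _ & _ & H & _). Qed.
Lemma wdl_mus : lam ⋅ wl t mus = wr mus t ⋅ wl s lam ⋅ wr lam s.
Proof. now destruct Hlam as (_ & _ & _ & _ & H & _). Qed.
Lemma wdl_etat : lam ⋅ wr etat s = wr mus t ⋅ wl s lam ⋅ wl (kcomp1 s t) etas ⋅ wl s etat.
Proof. now destruct Hlam as (_ & _ & _ & _ & _ & H & _). Qed.
Lemma wdl_etas : lam ⋅ wl t etas = wl s mut ⋅ wr lam t ⋅ wr etat (kcomp1 s t) ⋅ wr etas t.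
Proof. now destruct Hlam as (_ & _ & _ & _ & _ & _ & H). Qed.

Lemma mnd1_mu : is_mnd1 A A' t mut etat t' mut' etat' v psi ->
  psi ⋅ wr mut' v = wl v mut ⋅ wr psi t ⋅ wl t' psi.
Proof. now intros (_ & _ & H & _). Qed.
Lemma mnd1_eta : is_mnd1 A A' t mut etat t' mut' etat' v psi -> psi ⋅ wr etat' v = wl v etat.
Proof. now intros (_ & _ & _ & H). Qed.

Hypothesis Hv : is_wdl1 A A' t mut etat s mus etas lam t' mut' etat' s' mus' etas' lam' v xi zeta.

Lemma wdl1_mnd1_t : is_mnd1 A A' t mut etat t' mut' etat' v xi.
Proof. apply Hv. Qed.
Lemma wdl1_mnd1_s : is_mnd1 A A' s mus etas s' mus' etas' v zeta.
Proof. apply Hv. Qed.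
Lemma wdl1_compat :
  wl v lam ⋅ wr xi s ⋅ wl t' zeta = wl v (lambar t s mus etas lam) ⋅ wr zeta t ⋅ wl s' xi ⋅ wr lam' v.
Proof. apply Hv. Qed.
End Accessors.

Lemma comp1_id1_r (K : TwoCat) (u : C1 K) o : dom1 u = o -> comp1 u (id1 o) = u.
Proof. intros <-. apply comp1_id_r. Qed.

Lemma hcomp_id1_r (K : TwoCat) (b : C2 K) o : dom1 (src2 b) = o -> hcomp b (id2 (id1 o)) = b.
Proof. intros <-. apply hcomp_id_r. Qed.

Ltac on_each_index i tac :=
  first [ exfalso; lia | destruct i as [|i]; [tac | on_each_index i tac] ].

Ltac prove_diagram_valid :=
  unfold is_wdl2_hom, is_wdl2, is_wdl1, is_wdl, is_mnd1, is_monad, khom, kcell, cell2, hom1,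
    kcomp1, kid1, wl, wr, lambar in *; simpl in *;
  repeat match goal with H : _ /\ _ |- _ => destruct H end; split;
  [ intros i Hi; simpl in Hi; on_each_index i ltac:(simpl; repeat split; auto; congruence)
  | intros j Hj; simpl in Hj;
    on_each_index j ltac:(unfold word, word1, word2; simpl;
                          repeat rewrite comp1_id1_r by congruence;
                          repeat rewrite hcomp_id1_r by congruence; repeat split; auto; congruence) ].

Definition wdl_sig : signature := {|
  sig_cells := [(0, 0); (0, 0)];
  sig_gens := [([0; 0], [0], 0, 0); ([], [0], 0, 0); ([1; 1], [1], 0, 0); ([], [1], 0, 0);
               ([0; 1], [1; 0], 0, 0)] |}.

Lemma wdl_diagram (K : TwoCat) (A : Ob K) t mut etat s mus etas lam :
  is_wdl A t mut etat s mus etas lam ->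
  cells_valid wdl_sig (fun _ => A) (fun i => nth i [t; s] t) /\
  gens_valid wdl_sig (fun _ => A) (fun i => nth i [t; s] t)
    (fun j => nth j [mut; etat; mus; etas; lam] mut).
Proof. intros. prove_diagram_valid. Qed.

Definition wdl_hom_sig : signature := {|
  sig_cells := [(0, 0); (0, 0); (1, 1); (1, 1); (0, 1)];
  sig_gens := [([0; 0], [0], 0, 0); ([], [0], 0, 0); ([1; 1], [1], 0, 0); ([], [1], 0, 0);
               ([0; 1], [1; 0], 0, 0);
               ([2; 2], [2], 1, 1); ([], [2], 1, 1); ([3; 3], [3], 1, 1); ([], [3], 1, 1);
               ([2; 3], [3; 2], 1, 1);
               ([2; 4], [4; 0], 0, 1); ([3; 4], [4; 1], 0, 1)] |}.

Lemma wdl_hom_diagram (K : TwoCat) (A A' : Ob K) t mut etat s mus etas lam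
    t' mut' etat' s' mus' etas' lam' v xi zeta :
  is_wdl A t mut etat s mus etas lam -> is_wdl A' t' mut' etat' s' mus' etas' lam' ->
  is_wdl1 A A' t mut etat s mus etas lam t' mut' etat' s' mus' etas' lam' v xi zeta ->
  cells_valid wdl_hom_sig (fun i => nth i [A; A'] A) (fun i => nth i [t; s; t'; s'; v] t) /\
  gens_valid wdl_hom_sig (fun i => nth i [A; A'] A) (fun i => nth i [t; s; t'; s'; v] t)
    (fun j => nth j [mut; etat; mus; etas; lam; mut'; etat'; mus'; etas'; lam'; xi; zeta] mut).
Proof. intros. prove_diagram_valid. Qed.

Definition wdl2_sig : signature := {|
  sig_cells := [(0, 0); (0, 0); (0, 0)];
  sig_gens := [([0; 0], [0], 0, 0); ([], [0], 0, 0); ([1; 1], [1], 0, 0); ([], [1], 0, 0);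
               ([2; 2], [2], 0, 0); ([], [2], 0, 0);
               ([1; 0], [0; 1], 0, 0); ([2; 0], [0; 2], 0, 0); ([2; 1], [1; 2], 0, 0)] |}.

Lemma wdl2_diagram (K : TwoCat) (A : Ob K) s0 mu0 eta0 s1 mu1 eta1 s2 mu2 eta2 l01 l02 l12 :
  is_wdl2 A s0 mu0 eta0 s1 mu1 eta1 s2 mu2 eta2 l01 l02 l12 ->
  cells_valid wdl2_sig (fun _ => A) (fun i => nth i [s0; s1; s2] s0) /\
  gens_valid wdl2_sig (fun _ => A) (fun i => nth i [s0; s1; s2] s0)
    (fun j => nth j [mu0; eta0; mu1; eta1; mu2; eta2; l01; l02; l12] mu0).
Proof. intros. prove_diagram_valid. Qed.

Definition wdl2_hom_sig : signature := {|
  sig_cells := [(0, 0); (0, 0); (0, 0); (1, 1); (1, 1); (1, 1); (0, 1)];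
  sig_gens := [([0; 0], [0], 0, 0); ([], [0], 0, 0); ([1; 1], [1], 0, 0); ([], [1], 0, 0);
               ([2; 2], [2], 0, 0); ([], [2], 0, 0);
               ([1; 0], [0; 1], 0, 0); ([2; 0], [0; 2], 0, 0); ([2; 1], [1; 2], 0, 0);
               ([3; 3], [3], 1, 1); ([], [3], 1, 1); ([4; 4], [4], 1, 1); ([], [4], 1, 1);
               ([5; 5], [5], 1, 1); ([], [5], 1, 1);
               ([4; 3], [3; 4], 1, 1); ([5; 3], [3; 5], 1, 1); ([5; 4], [4; 5], 1, 1);
               ([3; 6], [6; 0], 0, 1); ([4; 6], [6; 1], 0, 1); ([5; 6], [6; 2], 0, 1)] |}.

Lemma wdl2_hom_diagram (K : TwoCat) (A A' : Ob K)
    s0 mu0 eta0 s1 mu1 eta1 s2 mu2 eta2 l01 l02 l12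
    s0' mu0' eta0' s1' mu1' eta1' s2' mu2' eta2' l01' l02' l12' v xi0 xi1 xi2 :
  is_wdl2 A s0 mu0 eta0 s1 mu1 eta1 s2 mu2 eta2 l01 l02 l12 ->
  is_wdl2 A' s0' mu0' eta0' s1' mu1' eta1' s2' mu2' eta2' l01' l02' l12' ->
  is_wdl2_hom A A' s0 mu0 eta0 s1 mu1 eta1 s2 mu2 eta2 l01 l02 l12
    s0' mu0' eta0' s1' mu1' eta1' s2' mu2' eta2' l01' l02' l12' v xi0 xi1 xi2 ->
  cells_valid wdl2_hom_sig (fun i => nth i [A; A'] A)
    (fun i => nth i [s0; s1; s2; s0'; s1'; s2'; v] s0) /\
  gens_valid wdl2_hom_sig (fun i => nth i [A; A'] A)
    (fun i => nth i [s0; s1; s2; s0'; s1'; s2'; v] s0)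
    (fun j => nth j [mu0; eta0; mu1; eta1; mu2; eta2; l01; l02; l12;
                     mu0'; eta0'; mu1'; eta1'; mu2'; eta2'; l01'; l02'; l12'; xi0; xi1; xi2] mu0).
Proof. intros. prove_diagram_valid. Qed.

(** * Weak distributive laws *)

Section Wdl.
Variables (K : TwoCat) (A : Ob K) (t : kb1 K) (mut etat : C2 K) (s : kb1 K) (mus etas lam : C2 K).
Hypothesis Hlam : is_wdl A t mut etat s mus etas lam.
Let Mt := wdl_monad_t Hlam.
Let Ms := wdl_monad_s Hlam.
Local Notation lb := (lambar t s mus etas lam).

Ltac setup := destruct (wdl_diagram Hlam) as [Hc Hg]; string_diagram.

Lemma lambar_lam : lb ⋅ lam = lam.
Proof. setup. drewrite <- (wdl_mus Hlam). drewrite (monad_unit_l Ms). by_interchange. Qed.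

Lemma lambar_idem : lb ⋅ lb = lb.
Proof. setup. drewrite <- (monad_assoc Ms). drewrite lambar_lam. by_interchange. Qed.

Lemma lambar_mus : lb ⋅ wr mus t = wr mus t ⋅ wl s lb.
Proof. setup. drewrite <- (monad_assoc Ms). by_interchange. Qed.

Lemma lambar_by_etat : lb = wl s mut ⋅ wr lam t ⋅ wr etat (kcomp1 s t).
Proof.
  setup.
  drewrite (wdl_etas Hlam). drewrite (wdl_etat Hlam). drewrite <- lambar_mus.
  drewrite (monad_unit_l Ms). drewrite <- (wdl_etat Hlam).
  by_interchange.
Qed.

Lemma lambar_mut : lb ⋅ wl s mut = wl s mut ⋅ wr lb t.
Proof.
  setup. drewrite lambar_by_etat. drewrite (monad_assoc Mt). drewrite <- lambar_by_etat.
  by_interchange.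
Qed.

Lemma cmp_mu_lambar_r : cmp_mu t s mut mus lam ⋅ wr lb (kcomp1 s t) = cmp_mu t s mut mus lam.
Proof.
  setup. drewrite <- (monad_assoc Ms). drewrite <- (wdl_mus Hlam). drewrite (monad_unit_r Ms).
  by_interchange.
Qed.

Lemma cmp_mu_lambar_l : cmp_mu t s mut mus lam ⋅ wl (kcomp1 s t) lb = cmp_mu t s mut mus lam.
Proof.
  setup. drewrite lambar_by_etat. drewrite (monad_assoc Mt). drewrite <- (wdl_mut Hlam).
  drewrite (monad_unit_l Mt).
  by_interchange.
Qed.
End Wdl.

(** * 1-cells of weak distributive laws and of composite monads *)

Section WdlHom.
Variables (K : TwoCat) (A A' : Ob K).
Variables (t : kb1 K) (mut etat : C2 K) (s : kb1 K) (mus etas lam : C2 K).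
Variables (t' : kb1 K) (mut' etat' : C2 K) (s' : kb1 K) (mus' etas' lam' : C2 K).
Variables (v : kb1 K) (xi zeta : C2 K).
Hypothesis Hlam : is_wdl A t mut etat s mus etas lam.
Hypothesis Hlam' : is_wdl A' t' mut' etat' s' mus' etas' lam'.
Hypothesis Hv : is_wdl1 A A' t mut etat s mus etas lam t' mut' etat' s' mus' etas' lam' v xi zeta.
Let Hxi := wdl1_mnd1_t Hv.
Let Hzeta := wdl1_mnd1_s Hv.
Local Notation lb := (lambar t s mus etas lam).
Local Notation lb' := (lambar t' s' mus' etas' lam').
Local Notation xs := (wl v lb ⋅ wr zeta t ⋅ wl s' xi).

Ltac setup := destruct (wdl_hom_diagram Hlam Hlam' Hv) as [Hc Hg]; string_diagram.

Lemma wdl1_cmp_lambar_l : wl v lb ⋅ xs = xs.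
Proof. setup. drewrite (lambar_idem Hlam). by_interchange. Qed.

Lemma wdl1_cmp_lambar_r : xs ⋅ wr lb' v = xs.
Proof.
  setup.
  drewrite (mnd1_mu Hzeta). drewrite (lambar_mus Hlam). drewrite <- (wdl1_compat Hv).
  drewrite (mnd1_eta Hzeta).
  by_interchange.
Qed.

Lemma wdl1_cmp_mu :
  xs ⋅ wr (cmp_mu t' s' mut' mus' lam') v
  = wl v (cmp_mu t s mut mus lam) ⋅ wr xs (cmp1 t s mus etas lam)
    ⋅ wl (cmp1 t' s' mus' etas' lam') xs.
Proof.
  setup.
  drewrite (mnd1_mu Hzeta). drewrite (mnd1_mu Hxi). drewrite (lambar_mut Hlam).
  drewrite (lambar_mus Hlam). drewrite <- (wdl1_compat Hv). drewrite <- (cmp_mu_lambar_l Hlam).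
  drewrite <- (cmp_mu_lambar_r Hlam). drewrite <- wdl1_cmp_lambar_r. drewrite <- (lambar_idem Hlam).
  by_interchange.
Qed.

Lemma wdl1_cmp_eta : xs ⋅ wr (cmp_eta etat' etas' lam') v = wl v (cmp_eta etat etas lam).
Proof.
  setup. drewrite <- (wdl1_compat Hv). drewrite (mnd1_eta Hzeta). drewrite (mnd1_eta Hxi).
  by_interchange.
Qed.

Lemma is_mnd1_cmp :
  is_mnd1 A A' (cmp1 t s mus etas lam) (cmp_mu t s mut mus lam) (cmp_eta etat etas lam)
    (cmp1 t' s' mus' etas' lam') (cmp_mu t' s' mut' mus' lam') (cmp_eta etat' etas' lam') v xs.
Proof.
  split; [exact (proj1 Hxi)|].
  split; [|exact (conj wdl1_cmp_mu wdl1_cmp_eta)].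
  split; [|exact (conj wdl1_cmp_lambar_l wdl1_cmp_lambar_r)].
  destruct (wdl_hom_diagram Hlam Hlam' Hv) as [Hc Hg].
  let H := diagram_cell2 constr:(xs) in pose proof H as [Hsrc Htgt].
  cbn [word1 fold_right nth fst] in Hsrc, Htgt.
  destruct Hlam as ((((Dt & Ct) & _) & _) & (((Ds & Cs) & _) & _) & _).
  destruct Hlam' as ((((Dt' & Ct') & _) & _) & (((Ds' & Cs') & _) & _) & _).
  destruct Hxi as (((Dv & Cv) & _) & _).
  rewrite !comp1_id1_r in Hsrc, Htgt by congruence.
  split; cbn [fst kcomp1 cmp1]; [rewrite <- comp1A by congruence|]; assumption.
Qed.
End WdlHom.

(** * Three weak distributive laws satisfying the Yang-Baxter equation *)

Section Wdl2.
Variables (K : TwoCat) (A : Ob K).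
Variables (s0 : kb1 K) (mu0 eta0 : C2 K) (s1 : kb1 K) (mu1 eta1 : C2 K).
Variables (s2 : kb1 K) (mu2 eta2 : C2 K) (l01 l02 l12 : C2 K).
Hypothesis H : is_wdl2 A s0 mu0 eta0 s1 mu1 eta1 s2 mu2 eta2 l01 l02 l12.
Let H01 := proj1 H.
Let H02 := proj1 (proj2 H).
Let H12 := proj1 (proj2 (proj2 H)).
Let yang_baxter := proj2 (proj2 (proj2 H)).
Local Notation lb01 := (lambar s1 s0 mu0 eta0 l01).
Local Notation lb02 := (lambar s2 s0 mu0 eta0 l02).
Local Notation lb12 := (lambar s2 s1 mu1 eta1 l12).
Local Notation l01_2 := (wl s0 l12 ⋅ wr l02 s1 ⋅ wl s2 lb01).
Local Notation l0_12 := (wr l01 s2 ⋅ wl s1 l02 ⋅ wr lb12 s0).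
(* [rho0] (resp. [rho2]) creates a unit of [s0] (resp. [s2]) and moves it
   across [s1 s2] (resp. [s0 s1]) into its multiplication; by [rho0_lambar12]
   both lead to the common idempotent of [l01_2] and [l0_12] on [s0 s1 s2]. *)
Local Notation rho0 :=
  (wr mu0 (kcomp1 s1 s2) ⋅ wl s0 (wr l01 s2) ⋅ wl s0 (wl s1 l02) ⋅ wl (kcomp1 s0 (kcomp1 s1 s2)) eta0).
Local Notation rho2 :=
  (wl (kcomp1 s0 s1) mu2 ⋅ wl s0 (wr l12 s2) ⋅ wr l02 (kcomp1 s1 s2) ⋅ wr eta2 (kcomp1 s0 (kcomp1 s1 s2))).

Ltac setup := destruct (wdl2_diagram H) as [Hc Hg]; string_diagram.

Lemma lam01_2_rho0 : l01_2 = rho0 ⋅ wl s0 l12 ⋅ wr l02 s1.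
Proof. setup. drewrite (wdl_mus H02). drewrite <- yang_baxter. by_interchange. Qed.

Lemma lam0_12_rho2 : l0_12 = rho2 ⋅ wr l01 s2 ⋅ wl s1 l02.
Proof.
  setup. drewrite (lambar_by_etat H12). drewrite (wdl_mut H02). drewrite yang_baxter.
  by_interchange.
Qed.

Lemma rho2_lambar02 : rho2 ⋅ wr l01 s2 ⋅ wl s1 lb02 = rho2 ⋅ wr l01 s2.
Proof.
  setup.
  drewrite (lambar_by_etat H02). drewrite (monad_assoc (wdl_monad_t H02)).
  drewrite <- lam0_12_rho2. drewrite (lambar_by_etat H12).
  drewrite (monad_unit_l (wdl_monad_t H02)). drewrite yang_baxter.
  by_interchange.
Qed.

Lemma rho0_lambar02 : rho0 ⋅ wl s0 l12 ⋅ wr lb02 s1 = rho0 ⋅ wl s0 l12.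
Proof.
  setup.
  drewrite <- (monad_assoc (wdl_monad_s H01)). drewrite <- lam01_2_rho0.
  drewrite (monad_unit_r (wdl_monad_s H01)). drewrite <- yang_baxter.
  by_interchange.
Qed.

Lemma rho0_lambar12 : rho0 ⋅ wl s0 lb12 = rho2 ⋅ wr lb01 s2.
Proof.
  setup.
  drewrite lam0_12_rho2. drewrite (wdl_etas H02). drewrite <- (lambar_by_etat H02).
  drewrite rho2_lambar02. drewrite (wdl_etat H02). drewrite <- (lambar_mus H02).
  drewrite <- (wdl_etat H02).
  by_interchange.
Qed.

Lemma lambar_lam01_2 :
  lambar s2 (cmp1 s1 s0 mu0 eta0 l01) (cmp_mu s1 s0 mu1 mu0 l01) (cmp_eta eta1 eta0 l01) l01_2
  = rho0 ⋅ wl s0 lb12.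
Proof.
  setup.
  drewrite (cmp_mu_lambar_r H01). drewrite (cmp_mu_lambar_r H01). drewrite (lambar_lam H01).
  drewrite <- yang_baxter. drewrite <- (wdl_mut H01).
  by_interchange.
Qed.

Lemma lambar_lam0_12 : lambar (cmp1 s2 s1 mu1 eta1 l12) s0 mu0 eta0 l0_12 = rho0 ⋅ wl s0 lb12.
Proof.
  setup.
  drewrite (lambar_idem H12). drewrite rho0_lambar12. drewrite (lambar_mut H12).
  drewrite (lambar_lam H12). drewrite <- rho0_lambar12.
  by_interchange.
Qed.
End Wdl2.

(** * 1-cells of the composite weak distributive laws *)

Section Wdl2Hom.
Variables (K : TwoCat) (A A' : Ob K).
Variables (s0 : kb1 K) (mu0 eta0 : C2 K) (s1 : kb1 K) (mu1 eta1 : C2 K).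
Variables (s2 : kb1 K) (mu2 eta2 : C2 K) (l01 l02 l12 : C2 K).
Variables (s0' : kb1 K) (mu0' eta0' : C2 K) (s1' : kb1 K) (mu1' eta1' : C2 K).
Variables (s2' : kb1 K) (mu2' eta2' : C2 K) (l01' l02' l12' : C2 K).
Variables (v : kb1 K) (xi0 xi1 xi2 : C2 K).
Hypothesis H : is_wdl2 A s0 mu0 eta0 s1 mu1 eta1 s2 mu2 eta2 l01 l02 l12.
Hypothesis H' : is_wdl2 A' s0' mu0' eta0' s1' mu1' eta1' s2' mu2' eta2' l01' l02' l12'.
Hypothesis Hv : is_wdl2_hom A A' s0 mu0 eta0 s1 mu1 eta1 s2 mu2 eta2 l01 l02 l12
  s0' mu0' eta0' s1' mu1' eta1' s2' mu2' eta2' l01' l02' l12' v xi0 xi1 xi2.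
Let H01 := proj1 H.
Let H12 := proj1 (proj2 (proj2 H)).
Let H01' := proj1 H'.
Let H12' := proj1 (proj2 (proj2 H')).
Let Hv01 := proj1 Hv.
Let Hv02 := proj1 (proj2 Hv).
Let Hv12 := proj2 (proj2 Hv).
Let Hxi0 := wdl1_mnd1_s Hv01.
Local Notation lb01 := (lambar s1 s0 mu0 eta0 l01).
Local Notation lb12 := (lambar s2 s1 mu1 eta1 l12).
Local Notation lb01' := (lambar s1' s0' mu0' eta0' l01').
Local Notation lb12' := (lambar s2' s1' mu1' eta1' l12').
Local Notation l01_2 := (wl s0 l12 ⋅ wr l02 s1 ⋅ wl s2 lb01).
Local Notation l0_12 := (wr l01 s2 ⋅ wl s1 l02 ⋅ wr lb12 s0).
Local Notation l01_2' := (wl s0' l12' ⋅ wr l02' s1' ⋅ wl s2' lb01').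
Local Notation l0_12' := (wr l01' s2' ⋅ wl s1' l02' ⋅ wr lb12' s0').
Local Notation rho0 :=
  (wr mu0 (kcomp1 s1 s2) ⋅ wl s0 (wr l01 s2) ⋅ wl s0 (wl s1 l02) ⋅ wl (kcomp1 s0 (kcomp1 s1 s2)) eta0).
Local Notation rho0' :=
  (wr mu0' (kcomp1 s1' s2') ⋅ wl s0' (wr l01' s2') ⋅ wl s0' (wl s1' l02')
   ⋅ wl (kcomp1 s0' (kcomp1 s1' s2')) eta0').
Local Notation xi01 := (wl v lb01 ⋅ wr xi0 s1 ⋅ wl s0' xi1).
Local Notation xi12 := (wl v lb12 ⋅ wr xi1 s2 ⋅ wl s1' xi2).
Local Notation xi012 := (wr xi0 (kcomp1 s1 s2) ⋅ wl s0' (wr xi1 s2) ⋅ wl (kcomp1 s0' s1') xi2).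

Ltac setup := destruct (wdl2_hom_diagram H H' Hv) as [Hc Hg]; string_diagram.

Lemma xi012_lam0_12 :
  wl v (rho0 ⋅ wl s0 lb12) ⋅ xi012 ⋅ wr l0_12' v = wl v l0_12 ⋅ wr xi12 s0 ⋅ wl (kcomp1 s1' s2') xi0.
Proof.
  setup.
  drewrite (rho0_lambar12 H). drewrite <- (lambar_idem H01). drewrite <- (wdl1_compat Hv01).
  drewrite (lambar_lam H01). drewrite <- (rho2_lambar02 H). drewrite <- (wdl1_compat Hv02).
  drewrite <- (lam0_12_rho2 H). drewrite (wdl1_cmp_lambar_r H12 H12' Hv12).
  drewrite <- (lambar_idem H12).
  by_interchange.
Qed.

Lemma xi012_rho0_lambar12 :
  wl v (rho0 ⋅ wl s0 lb12) ⋅ xi012 ⋅ wr (rho0' ⋅ wl s0' lb12') v = wl v (rho0 ⋅ wl s0 lb12) ⋅ xi012.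
Proof.
  setup.
  drewrite (mnd1_mu Hxi0). drewrite <- (monad_assoc (wdl_monad_s H01)).
  drewrite xi012_lam0_12. drewrite (mnd1_eta Hxi0). drewrite (lambar_idem H12).
  by_interchange.
Qed.

Lemma compat_lam01_2 :
  wl v l01_2 ⋅ wr xi2 (cmp1 s1 s0 mu0 eta0 l01) ⋅ wl s2' xi01 =
  wl v (lambar s2 (cmp1 s1 s0 mu0 eta0 l01) (cmp_mu s1 s0 mu1 mu0 l01) (cmp_eta eta1 eta0 l01) l01_2)
  ⋅ wr xi01 s2 ⋅ wl (cmp1 s1' s0' mu0' eta0' l01') xi2 ⋅ wr l01_2' v.
Proof.
  setup.
  drewrite (lambar_idem H01). drewrite (lambar_idem H01). drewrite (lam01_2_rho0 H).
  drewrite (wdl1_compat Hv02). drewrite (rho0_lambar02 H). drewrite (wdl1_compat Hv12).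
  drewrite <- xi012_rho0_lambar12. drewrite (lambar_lam H12'). drewrite <- (lam01_2_rho0 H').
  drewrite (rho0_lambar12 H). drewrite <- (lambar_idem H01). drewrite <- (rho0_lambar12 H).
  drewrite <- (lambar_lam01_2 H). drewrite <- (wdl1_cmp_lambar_r H01 H01' Hv01).
  by_interchange.
Qed.

Lemma compat_lam0_12 :
  wl v l0_12 ⋅ wr xi12 s0 ⋅ wl (cmp1 s2' s1' mu1' eta1' l12') xi0 =
  wl v (lambar (cmp1 s2 s1 mu1 eta1 l12) s0 mu0 eta0 l0_12)
  ⋅ wr xi0 (cmp1 s2 s1 mu1 eta1 l12) ⋅ wl s0' xi12 ⋅ wr l0_12' v.
Proof.
  setup.
  drewrite (wdl1_cmp_lambar_r H12 H12' Hv12). drewrite <- xi012_lam0_12.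
  drewrite <- (lambar_idem H12). drewrite <- (lambar_idem H12). drewrite <- (lambar_lam0_12 H).
  by_interchange.
Qed.
End Wdl2Hom.

Theorem lemma2p5 (K : TwoCat) (A A' : Ob K)
    (s0 : kb1 K) (mu0 eta0 : C2 K) (s1 : kb1 K) (mu1 eta1 : C2 K)
    (s2 : kb1 K) (mu2 eta2 : C2 K) (l01 l02 l12 : C2 K)
    (s0' : kb1 K) (mu0' eta0' : C2 K) (s1' : kb1 K) (mu1' eta1' : C2 K)
    (s2' : kb1 K) (mu2' eta2' : C2 K) (l01' l02' l12' : C2 K)
    (v : kb1 K) (xi0 xi1 xi2 : C2 K) :
  is_wdl2 A s0 mu0 eta0 s1 mu1 eta1 s2 mu2 eta2 l01 l02 l12 ->
  is_wdl2 A' s0' mu0' eta0' s1' mu1' eta1' s2' mu2' eta2' l01' l02' l12' ->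
  is_wdl2_hom A A' s0 mu0 eta0 s1 mu1 eta1 s2 mu2 eta2 l01 l02 l12
    s0' mu0' eta0' s1' mu1' eta1' s2' mu2' eta2' l01' l02' l12' v xi0 xi1 xi2 ->
  let lb01 := lambar s1 s0 mu0 eta0 l01 in
  let lb12 := lambar s2 s1 mu1 eta1 l12 in
  let lb01' := lambar s1' s0' mu0' eta0' l01' in
  let lb12' := lambar s2' s1' mu1' eta1' l12' in
  let s01 := cmp1 s1 s0 mu0 eta0 l01 in
  let mu01 := cmp_mu s1 s0 mu1 mu0 l01 in
  let eta01 := cmp_eta eta1 eta0 l01 in
  let s12 := cmp1 s2 s1 mu1 eta1 l12 in
  let mu12 := cmp_mu s2 s1 mu2 mu1 l12 in
  let eta12 := cmp_eta eta2 eta1 l12 in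
  let s01' := cmp1 s1' s0' mu0' eta0' l01' in
  let mu01' := cmp_mu s1' s0' mu1' mu0' l01' in
  let eta01' := cmp_eta eta1' eta0' l01' in
  let s12' := cmp1 s2' s1' mu1' eta1' l12' in
  let mu12' := cmp_mu s2' s1' mu2' mu1' l12' in
  let eta12' := cmp_eta eta2' eta1' l12' in
  let l01_2 := wl s0 l12 ⋅ wr l02 s1 ⋅ wl s2 lb01 in
  let l0_12 := wr l01 s2 ⋅ wl s1 l02 ⋅ wr lb12 s0 in
  let l01_2' := wl s0' l12' ⋅ wr l02' s1' ⋅ wl s2' lb01' in
  let l0_12' := wr l01' s2' ⋅ wl s1' l02' ⋅ wr lb12' s0' in
  let xi01 := wl v lb01 ⋅ wr xi0 s1 ⋅ wl s0' xi1 in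
  let xi12 := wl v lb12 ⋅ wr xi1 s2 ⋅ wl s1' xi2 in
  is_wdl1 A A' s2 mu2 eta2 s01 mu01 eta01 l01_2
               s2' mu2' eta2' s01' mu01' eta01' l01_2' v xi2 xi01 /\
  is_wdl1 A A' s12 mu12 eta12 s0 mu0 eta0 l0_12
               s12' mu12' eta12' s0' mu0' eta0' l0_12' v xi12 xi0.
Proof.
  intros H H' Hv; cbv zeta.
  pose proof H as (H01 & _ & H12 & _). pose proof H' as (H01' & _ & H12' & _).
  pose proof Hv as (Hv01 & Hv02 & Hv12).
  split; split.
  - exact (wdl1_mnd1_t Hv02).
  - exact (conj (is_mnd1_cmp H01 H01' Hv01) (compat_lam01_2 H H' Hv)).
  - exact (is_mnd1_cmp H12 H12' Hv12).
  - exact (conj (wdl1_mnd1_s Hv01) (compat_lam0_12 H H' Hv)).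
Qed.
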